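(* For real $m>0$ and $\epsilon$ with $m+2\epsilon>2$ and $\epsilon<2$, and $d=4+m/2-\epsilon$, define $$\Phi_{m,d}(v)=\frac{1}{2^{2+m}\pi^{(6+m-2\epsilon)/4}}\Bigg[\frac{\Gamma(1-\epsilon/2)}{\Gamma[(m+2)/4]}\,{}_1F_2\Big(1-\tfrac{\epsilon}{2};\tfrac12,\tfrac{m+2}{4};\tfrac{v^4}{64}\Big)-\frac{v^2\,\Gamma[(3-\epsilon)/2]}{4\,\Gamma(1+m/4)}\,{}_1F_2\Big(\tfrac{3-\epsilon}{2};\tfrac32,1+\tfrac{m}{4};\tfrac{v^4}{64}\Big)\Bigg].$$ Then for all real $v$, $$\Phi_{m,4+m/2-\epsilon}(v)=\frac{2^{-m-1}\pi^{(2\epsilon-6-m)/4}}{\Gamma[(m-2+2\epsilon)/4]}\int_0^1 dt\,t^{1-\epsilon}(1-t^2)^{(m-6+2\epsilon)/4}\,e^{-tv^2/4}.$$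
   Context: ${}_1F_2$ denotes the generalized hypergeometric function. $\Phi_{m,d}$ is the scaling function of the free Lifshitz-point propagator: the inverse Fourier transform of $(p^2+k^4)^{-1}$, $(\bm k,\bm p)\in\mathbb{R}^m\times\mathbb{R}^{d-m}$, equals $r^{-2+\epsilon}\Phi_{m,d}(z r^{-1/2})$ with $z=|\bm z|$, $r=|\bm r|$. *)

From Stdlib Require Import Reals Lra ClassicalEpsilon.
Open Scope R_scope.

Definition improper_int_0_1 (f : R -> R) (l : R) : Prop :=
  forall eps, 0 < eps -> exists delta, 0 < delta /\
    forall a b, 0 < a < delta -> 1 - delta < b < 1 ->
      exists pr : Riemann_integrable f a b, Rabs (RiemannInt pr - l) < eps.

Definition improper_int_0_inf (f : R -> R) (l : R) : Prop :=
  forall eps, 0 < eps -> exists delta M, 0 < delta /\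
    forall a b, 0 < a < delta -> M < b ->
      exists pr : Riemann_integrable f a b, Rabs (RiemannInt pr - l) < eps.

Definition Gamma (x : R) : R :=
  epsilon (inhabits 0)
    (fun l => improper_int_0_inf (fun t => Rpower t (x - 1) * exp (- t)) l).

Fixpoint poch (a : R) (k : nat) : R :=
  match k with
  | O => 1
  | S k' => poch a k' * (a + INR k')
  end.

Definition hyp1F2 (a b1 b2 z : R) : R :=
  epsilon (inhabits 0)
    (fun l => infinite_sum
       (fun k => poch a k / (poch b1 k * poch b2 k) * z ^ k / INR (Factorial.fact k)) l).

Definition Phi (m eps v : R) : R :=
  / (Rpower 2 (2 + m) * Rpower PI ((6 + m - 2 * eps) / 4)) *
  ( Gamma (1 - eps / 2) / Gamma ((m + 2) / 4)
      * hyp1F2 (1 - eps / 2) (1 / 2) ((m + 2) / 4) (v ^ 4 / 64)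
    - v ^ 2 * Gamma ((3 - eps) / 2) / (4 * Gamma (1 + m / 4))
      * hyp1F2 ((3 - eps) / 2) (3 / 2) (1 + m / 4) (v ^ 4 / 64) ).

(* After the substitution [s = t^2], the moments
   [int_0^1 t^(1-eps) (1-t^2)^((m-6+2eps)/4) t^n dt] are half Beta integrals [B(p + n/2, q)],
   with [p = 1 - eps/2] and [q = (m-2+2eps)/4].
   Expanding [exp (- t v^2/4)] in its power series and integrating term by term (the Taylor
   remainder is bounded uniformly on [0, 1] by the tail of the series of [exp (v^2/4)]), the
   relation [B(a, b) = Gamma a Gamma b / Gamma (a + b)] turns the even and the odd terms into the
   two 1F2 series of [Phi]. The Beta-Gamma relation itself comes from Gauss's limit
   [n^x B(x, n + 1) -> Gamma x], a consequence of
   [0 <= exp (-t) - (1 - t/n)^n <= t^2 exp (-t) / n] for [0 < t < n]. *)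

From Stdlib Require Import Reals Lra Lia ClassicalEpsilon FunctionalExtensionality Factorial.
Open Scope R_scope.

(** * Riemann integrals *)

Lemma derivable_pt_lim_val f x l l' :
  l = l' -> derivable_pt_lim f x l -> derivable_pt_lim f x l'.
Proof. now intros ->. Qed.

Lemma derivable_pt_lim_continuity_pt f x l :
  derivable_pt_lim f x l -> continuity_pt f x.
Proof. intros H; apply derivable_continuous_pt; exists l; exact H. Qed.

Lemma derivable_pt_lim_Rpower_comp f x l p : 0 < f x -> derivable_pt_lim f x l ->
  derivable_pt_lim (fun t => Rpower (f t) p) x (p * Rpower (f x) (p - 1) * l).
Proof.
  intros hfx H; apply (derivable_pt_lim_comp f (fun u => Rpower u p)); auto.
  now apply derivable_pt_lim_power.
Qed.

Lemma derivable_pt_lim_one_minus x : derivable_pt_lim (fun t => 1 - t) x (0 - 1).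
Proof.
  apply (derivable_pt_lim_minus (fun _ => 1) (fun t => t)).
  - apply derivable_pt_lim_const.
  - apply derivable_pt_lim_id.
Qed.

Lemma continuity_pt_ext f g x :
  (forall t, f t = g t) -> continuity_pt f x -> continuity_pt g x.
Proof. intros E; replace g with f; auto; now apply functional_extensionality. Qed.

Lemma continuity_pt_Rpower p x : 0 < x -> continuity_pt (fun t => Rpower t p) x.
Proof. intros; eapply derivable_pt_lim_continuity_pt; now apply derivable_pt_lim_power. Qed.

Lemma continuity_pt_Rpower_one_minus p x : x < 1 -> continuity_pt (fun t => Rpower (1 - t) p) x.
Proof.
  intros; eapply derivable_pt_lim_continuity_pt.
  apply derivable_pt_lim_Rpower_comp; [lra | apply derivable_pt_lim_one_minus].
Qed.

Lemma continuity_pt_exp_lin c x : continuity_pt (fun t => exp (c * t)) x.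
Proof.
  eapply derivable_pt_lim_continuity_pt.
  apply (derivable_pt_lim_comp (fun t => c * t) exp).
  - apply (derivable_pt_lim_scal (fun t => t)), derivable_pt_lim_id.
  - apply derivable_pt_lim_exp.
Qed.

(* [RiemannInt] with the integrability proof forgotten; unspecified if [f] is not integrable. *)
Definition integral (f : R -> R) (a b : R) : R :=
  epsilon (inhabits 0) (fun l => exists pr : Riemann_integrable f a b, RiemannInt pr = l).

Lemma integral_RiemannInt f a b (pr : Riemann_integrable f a b) : integral f a b = RiemannInt pr.
Proof.
  unfold integral.
  destruct (epsilon_spec (inhabits 0) (fun l => exists pr, RiemannInt pr = l)
      (ex_intro _ (RiemannInt pr) (ex_intro _ pr eq_refl))) as [pr' <-].
  apply RiemannInt_P5.
Qed.

Definition continuous_on (f : R -> R) a b := forall x, a <= x <= b -> continuity_pt f x.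

Lemma continuous_on_integrable f a b : a <= b -> continuous_on f a b -> Riemann_integrable f a b.
Proof. intros; now apply continuity_implies_RiemannInt. Qed.

Lemma continuous_on_subinterval f a b c d :
  continuous_on f a b -> a <= c -> d <= b -> continuous_on f c d.
Proof. intros H h1 h2 x hx; apply H; lra. Qed.

Lemma continuous_on_plus f g a b : continuous_on f a b -> continuous_on g a b ->
  continuous_on (fun t => f t + g t) a b.
Proof. intros H1 H2 x hx; apply (continuity_pt_plus f g); auto. Qed.

Lemma continuous_on_minus f g a b : continuous_on f a b -> continuous_on g a b ->
  continuous_on (fun t => f t - g t) a b.
Proof. intros H1 H2 x hx; apply (continuity_pt_minus f g); auto. Qed.

Lemma continuous_on_mult f g a b : continuous_on f a b -> continuous_on g a b ->
  continuous_on (fun t => f t * g t) a b.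
Proof. intros H1 H2 x hx; apply (continuity_pt_mult f g); auto. Qed.

Lemma continuous_on_const c a b : continuous_on (fun _ => c) a b.
Proof. intros x hx; apply (continuity_pt_const (fun _ => c)); now intros ? ?. Qed.

Lemma continuous_on_scal c f a b : continuous_on f a b -> continuous_on (fun t => c * f t) a b.
Proof. intros; apply continuous_on_mult; auto using continuous_on_const. Qed.

Lemma continuous_on_abs f a b : continuous_on f a b -> continuous_on (fun t => Rabs (f t)) a b.
Proof. intros H x hx; apply (continuity_pt_comp f Rabs); auto; apply Rcontinuity_abs. Qed.

Lemma continuous_on_pow n a b : continuous_on (fun t => t ^ n) a b.
Proof. intros t _; eapply derivable_pt_lim_continuity_pt; apply derivable_pt_lim_pow. Qed.

Lemma derivable_continuous_on f a b :
  (forall x, a <= x <= b -> exists l, derivable_pt_lim f x l) -> continuous_on f a b.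
Proof.
  intros H x hx; destruct (H x hx) as [l Hl]; eapply derivable_pt_lim_continuity_pt; eauto.
Qed.

Section Integral.
Variables a b : R.
Hypothesis hab : a <= b.

Lemma integral_lin f g l : continuous_on f a b -> continuous_on g a b ->
  integral (fun x => f x + l * g x) a b = integral f a b + l * integral g a b.
Proof.
  intros hf hg.
  set (p1 := continuous_on_integrable f a b hab hf).
  set (p2 := continuous_on_integrable g a b hab hg).
  rewrite (integral_RiemannInt _ _ _ (RiemannInt_P10 l p1 p2)),
    (integral_RiemannInt _ _ _ p1), (integral_RiemannInt _ _ _ p2).
  apply RiemannInt_P13.
Qed.

Lemma integral_const c : integral (fun _ => c) a b = c * (b - a).
Proof.
  change (integral (fct_cte c) a b = c * (b - a)).
  rewrite (integral_RiemannInt _ _ _ (RiemannInt_P14 a b c)); apply RiemannInt_P15.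
Qed.

Lemma integral_plus f g : continuous_on f a b -> continuous_on g a b ->
  integral (fun x => f x + g x) a b = integral f a b + integral g a b.
Proof.
  intros; rewrite <- (Rmult_1_l (integral g a b)), <- integral_lin; auto.
  f_equal; apply functional_extensionality; intros; ring.
Qed.

Lemma integral_minus f g : continuous_on f a b -> continuous_on g a b ->
  integral (fun x => f x - g x) a b = integral f a b - integral g a b.
Proof.
  intros; replace (integral f a b - integral g a b)
    with (integral f a b + (-1) * integral g a b) by ring.
  rewrite <- integral_lin; auto; f_equal; apply functional_extensionality; intros; ring.
Qed.

Lemma integral_scal f c : continuous_on f a b ->
  integral (fun x => c * f x) a b = c * integral f a b.
Proof.
  intros; replace (fun x => c * f x) with (fun x => (fun _ => 0) x + c * f x)
    by (apply functional_extensionality; intros; ring).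
  rewrite integral_lin, integral_const; auto using continuous_on_const; ring.
Qed.

Lemma integral_le f g : continuous_on f a b -> continuous_on g a b ->
  (forall x, a < x < b -> f x <= g x) -> integral f a b <= integral g a b.
Proof.
  intros hf hg H.
  rewrite (integral_RiemannInt _ _ _ (continuous_on_integrable f a b hab hf)),
    (integral_RiemannInt _ _ _ (continuous_on_integrable g a b hab hg)).
  now apply RiemannInt_P19.
Qed.

Lemma integral_ge0 f : continuous_on f a b -> (forall x, a < x < b -> 0 <= f x) ->
  0 <= integral f a b.
Proof.
  intros; replace 0 with (integral (fun _ => 0) a b) by (rewrite integral_const; ring).
  apply integral_le; auto using continuous_on_const.
Qed.

Lemma abs_integral_le f : continuous_on f a b ->
  Rabs (integral f a b) <= integral (fun x => Rabs (f x)) a b.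
Proof.
  intros hf; set (p := continuous_on_integrable f a b hab hf).
  rewrite (integral_RiemannInt _ _ _ p), (integral_RiemannInt _ _ _ (RiemannInt_P16 p)).
  now apply RiemannInt_P17.
Qed.

Lemma integral_ext f g : continuous_on f a b -> (forall x, a <= x <= b -> f x = g x) ->
  integral f a b = integral g a b.
Proof.
  intros hf H; set (p := continuous_on_integrable f a b hab hf).
  assert (q : Riemann_integrable g a b).
  { apply (@Riemann_integrable_ext f g a b); [|exact p]; intros x hx; apply H.
    now rewrite Rmin_left, Rmax_right in hx. }
  rewrite (integral_RiemannInt _ _ _ p), (integral_RiemannInt _ _ _ q).
  apply RiemannInt_P18; auto; intros; apply H; lra.
Qed.

Lemma integral_antiderivative F f : continuous_on f a b ->
  (forall x, a <= x <= b -> derivable_pt_lim F x (f x)) -> integral f a b = F b - F a.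
Proof.
  intros hc hd.
  assert (A1 := RiemannInt_P29 hab hc).
  assert (A2 : antiderivative f F a b).
  { split; [|exact hab]; intros x hx.
    exists (exist (fun l => derivable_pt_abs F x l) (f x) (hd x hx)); reflexivity. }
  destruct (antiderivative_Ucte _ _ _ _ _ A1 A2) as [c Hc].
  rewrite (integral_RiemannInt _ _ _ (continuous_on_integrable f a b hab hc)),
    (RiemannInt_P20 hab (FTC_P1 hab hc)), (Hc b), (Hc a); lra.
Qed.

End Integral.

Lemma integral_change_of_var f phi phi' a b : a <= b -> phi a <= phi b ->
  (forall t, a <= t <= b -> derivable_pt_lim phi t (phi' t)) ->
  (forall t, a <= t <= b -> phi a <= phi t <= phi b) ->
  continuous_on f (phi a) (phi b) -> continuous_on (fun t => f (phi t) * phi' t) a b ->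
  integral (fun t => f (phi t) * phi' t) a b = integral f (phi a) (phi b).
Proof.
  intros hab hphi hd himg hf hg.
  set (P := primitive hphi (FTC_P1 hphi hf)).
  assert (HP : forall y, phi a <= y <= phi b -> derivable_pt_lim P y (f y))
    by (intros y hy; now apply RiemannInt_P28).
  rewrite (integral_antiderivative _ _ hphi P f); auto.
  apply (integral_antiderivative _ _ hab (fun t => P (phi t))); auto.
  intros t ht; apply (derivable_pt_lim_comp phi P t (phi' t) (f (phi t))); auto.
Qed.

Lemma integral_chasles f a b c : a <= b -> b <= c -> continuous_on f a c ->
  integral f a b + integral f b c = integral f a c.
Proof.
  intros h1 h2 hf.
  rewrite (integral_RiemannInt _ _ _ (continuous_on_integrable f a b h1
             (continuous_on_subinterval _ _ _ _ _ hf (Rle_refl _) h2))),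
    (integral_RiemannInt _ _ _ (continuous_on_integrable f b c h2
             (continuous_on_subinterval _ _ _ _ _ hf h1 (Rle_refl _)))),
    (integral_RiemannInt _ _ _ (continuous_on_integrable f a c (Rle_trans _ _ _ h1 h2) hf)).
  apply RiemannInt_P26.
Qed.

Lemma integral_subinterval_le f a b c d : c <= a -> a <= b -> b <= d -> continuous_on f c d ->
  (forall x, c < x < d -> 0 <= f x) -> integral f a b <= integral f c d.
Proof.
  intros h1 h2 h3 hc hp.
  assert (hsub : forall u v, c <= u -> u <= v -> v <= d -> 0 <= integral f u v).
  { intros u v hu huv hv; apply integral_ge0; auto.
    - eapply continuous_on_subinterval; [exact hc | |]; lra.
    - intros; apply hp; lra. }
  rewrite <- (integral_chasles f c a d), <- (integral_chasles f a b d); try lra; auto.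
  - pose proof (hsub c a); pose proof (hsub b d); lra.
  - eapply continuous_on_subinterval; [exact hc | |]; lra.
Qed.

Lemma continuous_on_sum (g : nat -> R -> R) a b M : (forall n, continuous_on (g n) a b) ->
  continuous_on (fun t => sum_f_R0 (fun n => g n t) M) a b.
Proof. intros H; induction M; simpl; auto using continuous_on_plus. Qed.

Lemma integral_sum (g : nat -> R -> R) a b M : a <= b -> (forall n, continuous_on (g n) a b) ->
  integral (fun t => sum_f_R0 (fun n => g n t) M) a b = sum_f_R0 (fun n => integral (g n) a b) M.
Proof.
  intros hab H; induction M; simpl; auto.
  rewrite integral_plus; auto using continuous_on_sum; now rewrite IHM.
Qed.

(** * Improper integrals *)

Definition continuous_01 f := forall x, 0 < x < 1 -> continuity_pt f x.
Definition continuous_pos f := forall x, 0 < x -> continuity_pt f x.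

Lemma continuous_01_lin f g c : continuous_01 f -> continuous_01 g ->
  continuous_01 (fun x => f x + c * g x).
Proof.
  intros hf hg x hx; apply (continuity_pt_plus f (fun x => c * g x)); auto.
  apply (continuity_pt_scal g); auto.
Qed.

Lemma continuous_01_mult f g : continuous_01 f -> continuous_01 g ->
  continuous_01 (fun x => f x * g x).
Proof. intros hf hg x hx; apply (continuity_pt_mult f g); auto. Qed.

Lemma continuous_01_on f a b : continuous_01 f -> 0 < a -> b < 1 -> continuous_on f a b.
Proof. intros H ha hb x hx; apply H; lra. Qed.

Lemma continuous_pos_on f a b : continuous_pos f -> 0 < a -> continuous_on f a b.
Proof. intros H ha x hx; apply H; lra. Qed.

(* Variants of [improper_int_0_1] and [improper_int_0_inf] phrased with [integral]; the
   normalisations [delta <= 1/2] and [delta <= 1 <= M] make every admissible [a] lie below [b]. *)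
Definition improper_01 f l := forall e, 0 < e -> exists d, 0 < d <= 1/2 /\
  forall a b, 0 < a < d -> 1 - d < b < 1 -> Rabs (integral f a b - l) < e.

Definition improper_pos f l := forall e, 0 < e -> exists d M, 0 < d <= 1 /\ 1 <= M /\
  forall a b, 0 < a < d -> M < b -> Rabs (integral f a b - l) < e.

Lemma improper_01_improper_int_0_1 f l : continuous_01 f -> improper_01 f l -> improper_int_0_1 f l.
Proof.
  intros hc H e he; destruct (H e he) as [d [hd Hd]]; exists d; split; [lra|].
  intros a b ha hb; assert (hab : a <= b) by lra.
  exists (continuous_on_integrable f a b hab (continuous_01_on f a b hc ltac:(lra) ltac:(lra))).
  rewrite <- integral_RiemannInt; auto.
Qed.

Lemma improper_pos_improper_int_0_inf f l :
  continuous_pos f -> improper_pos f l -> improper_int_0_inf f l.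
Proof.
  intros hc H e he; destruct (H e he) as [d [M [hd [hM Hd]]]]; exists d, M; split; [lra|].
  intros a b ha hb; assert (hab : a <= b) by lra.
  exists (continuous_on_integrable f a b hab (continuous_pos_on f a b hc ltac:(lra))).
  rewrite <- integral_RiemannInt; auto.
Qed.

Lemma improper_int_0_inf_unique f l1 l2 :
  improper_int_0_inf f l1 -> improper_int_0_inf f l2 -> l1 = l2.
Proof.
  intros H1 H2; destruct (Req_dec l1 l2) as [E|E]; auto; exfalso.
  assert (hp : 0 < Rabs (l1 - l2) / 2) by (pose proof (Rabs_pos_lt (l1 - l2) ltac:(lra)); lra).
  destruct (H1 _ hp) as [d1 [M1 [hd1 K1]]]; destruct (H2 _ hp) as [d2 [M2 [hd2 K2]]].
  pose proof (Rmin_pos d1 d2 hd1 hd2); pose proof (Rmin_l d1 d2); pose proof (Rmin_r d1 d2).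
  pose proof (Rmax_l M1 M2); pose proof (Rmax_r M1 M2).
  set (a := Rmin d1 d2 / 2); set (b := Rmax M1 M2 + 1).
  destruct (K1 a b ltac:(unfold a; lra) ltac:(unfold b; lra)) as [p1 Q1].
  destruct (K2 a b ltac:(unfold a; lra) ltac:(unfold b; lra)) as [p2 Q2].
  rewrite (RiemannInt_P5 p1 p2) in Q1.
  pose proof (Rabs_triang (RiemannInt p2 - l2) (l1 - RiemannInt p2)) as T.
  replace (RiemannInt p2 - l2 + (l1 - RiemannInt p2)) with (l1 - l2) in T by ring.
  rewrite Rabs_minus_sym in Q1; lra.
Qed.

Lemma improper_01_le f g l1 l2 : continuous_01 f -> continuous_01 g ->
  (forall x, 0 < x < 1 -> f x <= g x) -> improper_01 f l1 -> improper_01 g l2 -> l1 <= l2.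
Proof.
  intros hf hg hle H1 H2; apply Rnot_lt_le; intro hlt.
  assert (hp : 0 < (l1 - l2) / 2) by lra.
  destruct (H1 _ hp) as [d1 [hd1 K1]]; destruct (H2 _ hp) as [d2 [hd2 K2]].
  pose proof (Rmin_pos d1 d2 ltac:(lra) ltac:(lra)); pose proof (Rmin_l d1 d2).
  pose proof (Rmin_r d1 d2).
  set (d := Rmin d1 d2) in *.
  specialize (K1 (d/2) (1 - d/2) ltac:(lra) ltac:(lra)).
  specialize (K2 (d/2) (1 - d/2) ltac:(lra) ltac:(lra)).
  assert (integral f (d/2) (1-d/2) <= integral g (d/2) (1-d/2)).
  { apply integral_le; try apply continuous_01_on; auto; try lra; intros; apply hle; lra. }
  apply Rabs_def2 in K1; apply Rabs_def2 in K2; lra.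
Qed.

Lemma improper_01_unique f l1 l2 :
  continuous_01 f -> improper_01 f l1 -> improper_01 f l2 -> l1 = l2.
Proof.
  intros hf H1 H2; apply Rle_antisym; eapply improper_01_le; eauto; intros; lra.
Qed.

Lemma improper_01_ext f g l : continuous_01 f -> (forall x, 0 < x < 1 -> f x = g x) ->
  improper_01 f l -> improper_01 g l.
Proof.
  intros hf E H e he; destruct (H e he) as [d [hd K]]; exists d; split; auto.
  intros a b ha hb; rewrite <- (integral_ext a b ltac:(lra) f g); auto.
  - apply continuous_01_on; auto; lra.
  - intros; apply E; lra.
Qed.

Lemma improper_01_lin f g l1 l2 c : continuous_01 f -> continuous_01 g ->
  improper_01 f l1 -> improper_01 g l2 -> improper_01 (fun x => f x + c * g x) (l1 + c * l2).
Proof.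
  intros hf hg H1 H2 e he.
  pose proof (Rabs_pos c) as hc.
  assert (he' : 0 < e / (2 * (Rabs c + 1))) by (apply Rdiv_lt_0_compat; lra).
  destruct (H1 _ he') as [d1 [hd1 K1]]; destruct (H2 _ he') as [d2 [hd2 K2]].
  pose proof (Rmin_pos d1 d2 ltac:(lra) ltac:(lra)); pose proof (Rmin_l d1 d2).
  pose proof (Rmin_r d1 d2).
  exists (Rmin d1 d2); split; [lra|]; intros a b ha hb.
  rewrite integral_lin; try apply continuous_01_on; auto; try lra.
  specialize (K1 a b ltac:(lra) ltac:(lra)); specialize (K2 a b ltac:(lra) ltac:(lra)).
  replace (integral f a b + c * integral g a b - (l1 + c * l2))
    with ((integral f a b - l1) + c * (integral g a b - l2)) by ring.
  eapply Rle_lt_trans; [apply Rabs_triang|]; rewrite Rabs_mult.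
  assert (Rabs c * Rabs (integral g a b - l2) <= Rabs c * (e / (2 * (Rabs c + 1))))
    by (apply Rmult_le_compat_l; lra).
  assert (Rabs c * (e / (2 * (Rabs c + 1))) <= e / 2).
  { replace (Rabs c * (e / (2 * (Rabs c + 1)))) with (e / 2 * (Rabs c / (Rabs c + 1)))
      by (field; lra).
    assert (Rabs c / (Rabs c + 1) <= 1).
    { apply (Rmult_le_reg_r (Rabs c + 1)); [lra|].
      unfold Rdiv; rewrite Rmult_assoc, Rinv_l; lra. }
    nra. }
  assert (e / (2 * (Rabs c + 1)) <= e / 2).
  { apply Rmult_le_compat_l; [lra|]; apply Rinv_le_contravar; lra. }
  lra.
Qed.

(* The limit is the supremum of the integrals over [a, 1 - a]. *)
Lemma improper_01_exists f B : continuous_01 f -> (forall x, 0 < x < 1 -> 0 <= f x) ->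
  (forall a b, 0 < a <= b -> b < 1 -> integral f a b <= B) ->
  exists l, improper_01 f l /\ forall a b, 0 < a <= b -> b < 1 -> integral f a b <= l.
Proof.
  intros hc hp hB.
  assert (mono : forall a b c d, 0 < c <= a -> a <= b -> b <= d -> d < 1 ->
    integral f a b <= integral f c d).
  { intros; apply integral_subinterval_le; try lra; [apply continuous_01_on; auto; lra|].
    intros; apply hp; lra. }
  set (E := fun y => exists a, 0 < a <= 1/2 /\ y = integral f a (1 - a)).
  assert (bE : bound E) by (exists B; intros y [a [ha ->]]; apply hB; lra).
  assert (nE : exists y, E y)
    by (exists (integral f (1/2) (1 - 1/2)); exists (1/2); split; auto; lra).
  destruct (completeness E bE nE) as [l [Hub Hlub]].
  assert (Hle : forall a b, 0 < a <= b -> b < 1 -> integral f a b <= l).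
  { intros a b ha hb; set (c := Rmin a (1 - b)).
    pose proof (Rmin_l a (1 - b)); pose proof (Rmin_r a (1 - b)).
    pose proof (Rmin_pos a (1 - b) ltac:(lra) ltac:(lra)).
    apply Rle_trans with (integral f c (1 - c)); [apply mono; unfold c in *; lra|].
    apply Hub; exists c; split; auto; split; auto; unfold c in *; lra. }
  exists l; split; auto; intros e he.
  assert (exists y, E y /\ l - e < y) as [y [[a0 [ha0 ->]] hy]].
  { apply NNPP; intro N; assert (l <= l - e); [|lra].
    apply Hlub; intros y Ey; apply Rnot_lt_le; intro; apply N; exists y; auto. }
  exists a0; split; auto; intros a b ha hb.
  assert (integral f a0 (1 - a0) <= integral f a b) by (apply mono; lra).
  assert (integral f a b <= l) by (apply Hle; lra).
  apply Rabs_def1; lra.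
Qed.

Lemma improper_pos_exists f B : continuous_pos f -> (forall x, 0 < x -> 0 <= f x) ->
  (forall a b, 0 < a <= b -> integral f a b <= B) ->
  exists l, improper_pos f l /\ forall a b, 0 < a <= b -> integral f a b <= l.
Proof.
  intros hc hp hB.
  assert (mono : forall a b c d, 0 < c <= a -> a <= b -> b <= d ->
    integral f a b <= integral f c d).
  { intros; apply integral_subinterval_le; try lra; [apply continuous_pos_on; auto; lra|].
    intros; apply hp; lra. }
  assert (inv_ge1 : forall a, 0 < a <= 1 -> 1 <= / a).
  { intros a ha; rewrite <- Rinv_1; apply Rinv_le_contravar; lra. }
  set (E := fun y => exists a, 0 < a <= 1 /\ y = integral f a (/ a)).
  assert (bE : bound E)
    by (exists B; intros y [a [ha ->]]; apply hB; pose proof (inv_ge1 a ha); lra).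
  assert (nE : exists y, E y) by (exists (integral f 1 (/1)); exists 1; split; auto; lra).
  destruct (completeness E bE nE) as [l [Hub Hlub]].
  assert (Hle : forall a b, 0 < a <= b -> integral f a b <= l).
  { intros a b ha; set (c := Rmin (Rmin a (/ b)) 1).
    assert (hb0 : 0 < / b) by (apply Rinv_0_lt_compat; lra).
    pose proof (Rmin_l (Rmin a (/ b)) 1); pose proof (Rmin_r (Rmin a (/ b)) 1).
    pose proof (Rmin_l a (/ b)); pose proof (Rmin_r a (/ b)).
    assert (hc3 : 0 < c) by (unfold c; repeat apply Rmin_pos; lra).
    assert (hbc : b <= / c)
      by (rewrite <- (Rinv_inv b); apply Rinv_le_contravar; unfold c in *; lra).
    apply Rle_trans with (integral f c (/ c)); [apply mono; unfold c in *; lra|].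
    apply Hub; exists c; split; auto; unfold c in *; lra. }
  exists l; split; auto; intros e he.
  assert (exists y, E y /\ l - e < y) as [y [[a0 [ha0 ->]] hy]].
  { apply NNPP; intro N; assert (l <= l - e); [|lra].
    apply Hlub; intros y Ey; apply Rnot_lt_le; intro; apply N; exists y; auto. }
  pose proof (inv_ge1 a0 ha0).
  exists a0, (/ a0); split; auto; split; auto; intros a b ha hb.
  assert (integral f a0 (/ a0) <= integral f a b) by (apply mono; lra).
  assert (integral f a b <= l) by (apply Hle; lra).
  apply Rabs_def1; lra.
Qed.

(** * The Gamma function *)

Lemma exp_le_exp x y : x <= y -> exp x <= exp y.
Proof. intros [H|H]; [left; now apply exp_increasing | subst; lra]. Qed.

Lemma ln_le x y : 0 < x -> x <= y -> ln x <= ln y.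
Proof. intros h [H|H]; [left; now apply ln_increasing | subst; lra]. Qed.

Lemma Rpower_pos x y : 0 < Rpower x y.
Proof. apply exp_pos. Qed.

Lemma Rpower_base_1 y : Rpower 1 y = 1.
Proof. unfold Rpower; now rewrite ln_1, Rmult_0_r, exp_0. Qed.

Lemma Rpower_le_1 t y : 0 < t <= 1 -> 0 <= y -> Rpower t y <= 1.
Proof.
  intros ht hy; rewrite <- (Rpower_base_1 y); apply Rle_Rpower_l; lra.
Qed.

Lemma Rpower_exp t y : Rpower (exp t) y = exp (y * t).
Proof. unfold Rpower; now rewrite ln_exp. Qed.

Lemma Rpower_sqr t y : 0 < t -> Rpower (t ^ 2) y = Rpower t (2 * y).
Proof. intros; rewrite <- (Rpower_pow 2 t), Rpower_mult by auto; f_equal; simpl; ring. Qed.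

Lemma Rpower_minus_1 t p : 0 < t -> Rpower t p = t * Rpower t (p - 1).
Proof. intros; rewrite <- (Rpower_1 t) at 2 by auto; rewrite <- Rpower_plus; f_equal; ring. Qed.

Lemma Rpower_le_2_abs s e : /2 <= s <= 2 -> Rpower s e <= Rpower 2 (Rabs e).
Proof.
  intros hs; unfold Rpower; apply exp_le_exp.
  assert (ln s <= ln 2) by (apply ln_le; lra).
  assert (- ln 2 <= ln s)
    by (rewrite <- ln_Rinv by lra; apply ln_le; [apply Rinv_0_lt_compat|]; lra).
  apply Rle_trans with (Rabs (e * ln s)); [apply Rle_abs|]; rewrite Rabs_mult.
  apply Rmult_le_compat_l; [apply Rabs_pos | apply Rabs_le; lra].
Qed.

Definition gamma_integrand x t := Rpower t (x - 1) * exp (- t).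

Lemma continuous_pos_gamma_integrand x : continuous_pos (gamma_integrand x).
Proof.
  intros t ht; apply (continuity_pt_mult (fun t => Rpower t (x - 1)) (fun t => exp (- t))).
  - now apply continuity_pt_Rpower.
  - apply (continuity_pt_ext (fun t => exp (-1 * t))); [intros; f_equal; ring|].
    apply continuity_pt_exp_lin.
Qed.

Lemma gamma_integrand_ge0 x t : 0 <= gamma_integrand x t.
Proof. apply Rmult_le_pos; left; [apply Rpower_pos | apply exp_pos]. Qed.

Lemma pow_le_exp (N : nat) t : (0 < N)%nat -> 0 <= t -> t ^ N <= INR N ^ N * exp t.
Proof.
  intros hN ht; assert (hN' : 0 < INR N) by (apply lt_0_INR; lia).
  replace (exp t) with (exp (t / INR N) ^ N)
    by (rewrite <- Rpower_pow, Rpower_exp by apply exp_pos; f_equal; field; lra).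
  rewrite <- Rpow_mult_distr; apply pow_incr; split; auto.
  pose proof (exp_ineq1_le (t / INR N)).
  replace t with (INR N * (t / INR N)) at 1 by (field; lra).
  apply Rmult_le_compat_l; lra.
Qed.

Lemma gamma_integrand_tail x :
  exists K, 0 <= K /\ forall t, 1 <= t -> gamma_integrand x t <= K / t ^ 2.
Proof.
  destruct (INR_unbounded (Rabs x + 1)) as [N hN].
  pose proof (Rle_abs x); pose proof (Rabs_pos x).
  assert (hN0 : (0 < N)%nat) by (apply INR_lt; simpl; lra).
  exists (INR N ^ N); split; [apply pow_le, pos_INR|].
  intros t ht; unfold gamma_integrand.
  assert (t2 : 0 < t ^ 2) by (apply pow_lt; lra).
  apply (Rmult_le_reg_r (t ^ 2)); auto.
  replace (INR N ^ N / t ^ 2 * t ^ 2) with (INR N ^ N) by (field; lra).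
  replace (Rpower t (x - 1) * exp (- t) * t ^ 2) with (Rpower t (x + 1) * exp (- t))
    by (rewrite <- (Rpower_pow 2 t) by lra; replace (x + 1) with ((x - 1) + INR 2) by (simpl; ring);
        rewrite Rpower_plus; ring).
  apply Rle_trans with (t ^ N * exp (- t)).
  - apply Rmult_le_compat_r; [left; apply exp_pos|].
    rewrite <- Rpower_pow by lra; apply Rle_Rpower; lra.
  - apply Rle_trans with (INR N ^ N * exp t * exp (- t)).
    + apply Rmult_le_compat_r; [left; apply exp_pos | apply pow_le_exp; [lia | lra]].
    + rewrite Rmult_assoc, <- exp_plus, Rplus_opp_r, exp_0; lra.
Qed.

Lemma integral_Rpower_le x c : 0 < x -> 0 < c <= 1 ->
  integral (fun t => Rpower t (x - 1)) c 1 <= / x.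
Proof.
  intros hx hc; rewrite (integral_antiderivative c 1 ltac:(lra) (fun t => Rpower t x / x)).
  - rewrite Rpower_base_1; pose proof (Rpower_pos c x).
    assert (0 < Rpower c x / x) by (apply Rdiv_lt_0_compat; auto).
    unfold Rdiv in *; lra.
  - intros t ht; apply continuity_pt_Rpower; lra.
  - intros t ht; apply (derivable_pt_lim_val _ _ (x * Rpower t (x - 1) / x)); [field; lra|].
    apply derivable_pt_lim_div_scal, derivable_pt_lim_power; lra.
Qed.

Lemma integral_inv_sqr_le K d : 1 <= d -> 0 <= K -> integral (fun t => K * Rpower t (-2)) 1 d <= K.
Proof.
  intros hd hK; rewrite (integral_antiderivative _ _ hd (fun t => - K * Rpower t (-1))).
  - rewrite Rpower_base_1; pose proof (Rpower_pos d (-1)).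
    assert (Rpower d (-1) <= 1).
    { replace (-1) with (- (1)) by ring; rewrite Rpower_Ropp, Rpower_1 by lra.
      rewrite <- Rinv_1; apply Rinv_le_contravar; lra. }
    nra.
  - apply continuous_on_scal; intros t ht; apply continuity_pt_Rpower; lra.
  - intros t ht; apply (derivable_pt_lim_val _ _ (- K * (-1 * Rpower t (-1 - 1))));
      [replace (-1 - 1) with (-2) by ring; ring|].
    apply (derivable_pt_lim_scal (fun t => Rpower t (-1))), derivable_pt_lim_power; lra.
Qed.

Lemma integral_gamma_integrand_bounded x : 0 < x ->
  exists B, forall a b, 0 < a <= b -> integral (gamma_integrand x) a b <= B.
Proof.
  intros hx; destruct (gamma_integrand_tail x) as [K [hK HK]].
  exists (/ x + K); intros a b hab.
  set (c := Rmin a 1); set (d := Rmax b 1).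
  pose proof (Rmin_l a 1); pose proof (Rmin_r a 1); pose proof (Rmin_pos a 1 ltac:(lra) ltac:(lra)).
  pose proof (Rmax_l b 1); pose proof (Rmax_r b 1).
  assert (hcont : forall u v, 0 < u -> continuous_on (gamma_integrand x) u v)
    by (intros; apply continuous_pos_on; [apply continuous_pos_gamma_integrand | auto]).
  apply Rle_trans with (integral (gamma_integrand x) c d).
  { apply integral_subinterval_le; unfold c, d in *; try lra; auto.
    intros; apply gamma_integrand_ge0. }
  rewrite <- (integral_chasles _ c 1 d); unfold c, d in *; try lra; auto.
  apply Rplus_le_compat.
  - apply Rle_trans with (integral (fun t => Rpower t (x - 1)) (Rmin a 1) 1);
    [|apply integral_Rpower_le; lra].
    apply integral_le; [lra | apply hcont; lra | intros t ht; apply continuity_pt_Rpower; lra |].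
    intros t ht; unfold gamma_integrand; rewrite <- Rmult_1_r.
    apply Rmult_le_compat_l; [left; apply Rpower_pos|]; rewrite <- exp_0; apply exp_le_exp; lra.
  - apply Rle_trans with (integral (fun t => K * Rpower t (-2)) 1 (Rmax b 1));
    [|apply integral_inv_sqr_le; lra].
    apply integral_le; [lra | apply hcont; lra | |].
    + apply continuous_on_scal; intros t ht; apply continuity_pt_Rpower; lra.
    + intros t ht; replace (-2) with (- INR 2) by (simpl; ring).
      rewrite Rpower_Ropp, Rpower_pow by lra; apply HK; lra.
Qed.

Lemma Gamma_spec x : 0 < x -> improper_pos (gamma_integrand x) (Gamma x) /\
  forall a b, 0 < a <= b -> integral (gamma_integrand x) a b <= Gamma x.
Proof.
  intros hx; destruct (integral_gamma_integrand_bounded x hx) as [B HB].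
  destruct (improper_pos_exists (gamma_integrand x) B (continuous_pos_gamma_integrand x)
              (fun t _ => gamma_integrand_ge0 x t) HB) as [l [Hl Hle]].
  assert (Hl' := improper_pos_improper_int_0_inf _ _ (continuous_pos_gamma_integrand x) Hl).
  replace (Gamma x) with l; auto.
  apply (improper_int_0_inf_unique (gamma_integrand x)); auto.
  apply (epsilon_spec (inhabits 0) (improper_int_0_inf (gamma_integrand x))); eauto.
Qed.

Lemma Gamma_pos x : 0 < x -> 0 < Gamma x.
Proof.
  intros hx; apply Rlt_le_trans with (integral (gamma_integrand x) 1 2); [|apply Gamma_spec; lra].
  set (c := exp (- (Rabs (x - 1) * ln 2)) * exp (-2)).
  assert (0 < c) by (apply Rmult_lt_0_compat; apply exp_pos).
  apply Rlt_le_trans with (integral (fun _ => c) 1 2); [rewrite integral_const; lra|].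
  apply integral_le; [lra | apply continuous_on_const |
    apply continuous_pos_on; [apply continuous_pos_gamma_integrand | lra] |].
  intros t ht; unfold c, gamma_integrand.
  apply Rmult_le_compat; try (left; apply exp_pos); [|apply exp_le_exp; lra].
  unfold Rpower; apply exp_le_exp.
  assert (0 <= ln t <= ln 2) by (split; [rewrite <- ln_1|]; apply ln_le; lra).
  assert (Rabs ((x - 1) * ln t) <= Rabs (x - 1) * ln 2).
  { rewrite Rabs_mult, (Rabs_pos_eq (ln t)) by lra.
    apply Rmult_le_compat_l; [apply Rabs_pos | lra]. }
  pose proof (Rle_abs (- ((x - 1) * ln t))) as Hq; rewrite Rabs_Ropp in Hq; lra.
Qed.

(** * The Beta function *)

Lemma limit1_in_continuity_pt f D x0 : continuity_pt f x0 -> limit1_in f D (f x0) x0.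
Proof.
  intros H e he; destruct (H e he) as [d [hd K]]; exists d; split; auto.
  intros x [_ hx]; destruct (Req_dec x x0) as [->|ne].
  - simpl; unfold R_dist; rewrite Rminus_diag, Rabs_R0; auto.
  - apply K; repeat split; auto.
Qed.

Lemma limit1_in_Rpower_0 p : 0 < p -> limit1_in (fun t => Rpower t p) (fun t => 0 < t < 1) 0 0.
Proof.
  intros hp e he; exists (exp (ln e / p)); split; [apply exp_pos|].
  intros t [ht hd]; simpl in *; unfold R_dist in *.
  rewrite !Rminus_0_r, (Rabs_pos_eq t) in * by lra.
  rewrite Rabs_pos_eq by (left; apply Rpower_pos).
  rewrite <- (exp_ln e) by auto; apply exp_increasing.
  assert (ln t < ln e / p) by (rewrite <- (ln_exp (ln e / p)); apply ln_increasing; lra).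
  apply (Rmult_lt_compat_l p) in H; auto.
  replace (p * (ln e / p)) with (ln e) in H by (field; lra); lra.
Qed.

Lemma limit1_in_Rpower_one_minus_1 q : 0 < q ->
  limit1_in (fun t => Rpower (1 - t) q) (fun t => 0 < t < 1) 0 1.
Proof.
  intros hq e he; destruct (limit1_in_Rpower_0 q hq e he) as [d [hd K]]; exists d; split; auto.
  intros t [ht hdt]; apply (K (1 - t)); simpl in *; unfold R_dist in *; split; [lra|].
  rewrite Rabs_minus_sym in hdt; now replace (1 - t - 0) with (1 - t) by ring.
Qed.

Lemma improper_01_antiderivative f F l0 l1 : continuous_01 f ->
  (forall x, 0 < x < 1 -> derivable_pt_lim F x (f x)) ->
  limit1_in F (fun t => 0 < t < 1) l0 0 -> limit1_in F (fun t => 0 < t < 1) l1 1 ->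
  improper_01 f (l1 - l0).
Proof.
  intros hf hF H0 H1 e he.
  destruct (H0 (e / 2) ltac:(lra)) as [d0 [hd0 K0]].
  destruct (H1 (e / 2) ltac:(lra)) as [d1 [hd1 K1]].
  assert (hd : 0 < Rmin (Rmin d0 d1) (1/2)) by (repeat apply Rmin_pos; lra).
  pose proof (Rmin_l (Rmin d0 d1) (1/2)); pose proof (Rmin_r (Rmin d0 d1) (1/2)).
  pose proof (Rmin_l d0 d1); pose proof (Rmin_r d0 d1).
  set (d := Rmin (Rmin d0 d1) (1/2)) in *.
  exists d; split; [lra|]; intros a b ha hb.
  rewrite (integral_antiderivative a b ltac:(lra) F f).
  - specialize (K0 a); specialize (K1 b); simpl in K0, K1; unfold R_dist in K0, K1.
    assert (A0 : Rabs (F a - l0) < e / 2)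
      by (apply K0; split; [lra | rewrite Rminus_0_r, Rabs_pos_eq; lra]).
    assert (A1 : Rabs (F b - l1) < e / 2)
      by (apply K1; split; [lra | rewrite Rabs_minus_sym, Rabs_pos_eq; lra]).
    apply Rabs_def2 in A0; apply Rabs_def2 in A1; apply Rabs_def1; lra.
  - apply continuous_01_on; auto; lra.
  - intros; apply hF; lra.
Qed.

Definition beta_integrand p q t := Rpower t (p - 1) * Rpower (1 - t) (q - 1).

Lemma continuous_01_beta_integrand p q : continuous_01 (beta_integrand p q).
Proof.
  intros t ht.
  apply (continuity_pt_mult (fun t => Rpower t (p - 1)) (fun t => Rpower (1 - t) (q - 1))).
  - apply continuity_pt_Rpower; lra.
  - apply continuity_pt_Rpower_one_minus; lra.
Qed.

Lemma beta_integrand_ge0 p q t : 0 <= beta_integrand p q t.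
Proof. apply Rmult_le_pos; left; apply Rpower_pos. Qed.

Lemma integral_Rpower_one_minus_le q a b : 0 < q -> 0 < a <= b -> b < 1 ->
  integral (fun t => Rpower (1 - t) (q - 1)) a b <= / q.
Proof.
  intros hq hab hb.
  rewrite (integral_antiderivative a b ltac:(lra) (fun t => - Rpower (1 - t) q / q)).
  - assert (0 < Rpower (1 - b) q / q) by (apply Rdiv_lt_0_compat; auto; apply Rpower_pos).
    assert (Rpower (1 - a) q / q <= / q).
    { unfold Rdiv; rewrite <- (Rmult_1_l (/ q)) at 2.
      apply Rmult_le_compat_r; [left; apply Rinv_0_lt_compat; lra | apply Rpower_le_1; lra]. }
    unfold Rdiv in *; lra.
  - intros t ht; apply continuity_pt_Rpower_one_minus; lra.
  - intros t ht; apply (derivable_pt_lim_val _ _ (- (q * Rpower (1 - t) (q - 1) * (0 - 1)) / q));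
      [field; lra|].
    apply derivable_pt_lim_div_scal, derivable_pt_lim_opp, derivable_pt_lim_Rpower_comp;
      [lra | apply derivable_pt_lim_one_minus].
Qed.

Lemma integral_beta_integrand_le p q : 0 < p -> 0 < q -> forall a b, 0 < a <= b -> b < 1 ->
  integral (beta_integrand p q) a b
    <= Rpower 2 (Rabs (q - 1)) * / p + Rpower 2 (Rabs (p - 1)) * / q.
Proof.
  intros hp hq a b hab hb.
  assert (c1 : continuous_on (fun t => Rpower t (p - 1)) a b)
    by (intros t ht; apply continuity_pt_Rpower; lra).
  assert (c2 : continuous_on (fun t => Rpower (1 - t) (q - 1)) a b)
    by (intros t ht; apply continuity_pt_Rpower_one_minus; lra).
  set (C1 := Rpower 2 (Rabs (q - 1))); set (C2 := Rpower 2 (Rabs (p - 1))).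
  apply Rle_trans with
    (integral (fun t => C1 * Rpower t (p - 1) + C2 * Rpower (1 - t) (q - 1)) a b).
  - apply integral_le; try lra;
      [apply continuous_01_on; [apply continuous_01_beta_integrand | lra | lra]
      | apply continuous_on_plus; apply continuous_on_scal; auto |].
    intros t ht; unfold beta_integrand.
    pose proof (Rpower_pos t (p - 1)); pose proof (Rpower_pos (1 - t) (q - 1)).
    assert (0 < C1) by apply Rpower_pos; assert (0 < C2) by apply Rpower_pos.
    destruct (Rle_dec t (1/2)).
    + assert (Rpower (1 - t) (q - 1) <= C1) by (apply Rpower_le_2_abs; lra); nra.
    + assert (Rpower t (p - 1) <= C2) by (apply Rpower_le_2_abs; lra); nra.
  - rewrite integral_plus, !integral_scal; try lra; try apply continuous_on_scal; auto.
    apply Rplus_le_compat; apply Rmult_le_compat_l; try (left; apply Rpower_pos).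
    + apply Rle_trans with (integral (fun t => Rpower t (p - 1)) a 1);
      [|apply integral_Rpower_le; lra].
      apply integral_subinterval_le; try lra; [intros t ht; apply continuity_pt_Rpower; lra|].
      intros; left; apply Rpower_pos.
    + apply integral_Rpower_one_minus_le; lra.
Qed.

Definition Beta p q := epsilon (inhabits 0) (improper_01 (beta_integrand p q)).

Lemma Beta_spec p q : 0 < p -> 0 < q -> improper_01 (beta_integrand p q) (Beta p q) /\
  forall a b, 0 < a <= b -> b < 1 -> integral (beta_integrand p q) a b <= Beta p q.
Proof.
  intros hp hq.
  destruct (improper_01_exists (beta_integrand p q) _ (continuous_01_beta_integrand p q)
              (fun t _ => beta_integrand_ge0 p q t) (integral_beta_integrand_le p q hp hq))
    as [l [Hl Hle]].
  replace (Beta p q) with l; auto.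
  apply (improper_01_unique (beta_integrand p q)); auto using continuous_01_beta_integrand.
  apply (epsilon_spec (inhabits 0) (improper_01 (beta_integrand p q))); eauto.
Qed.

Lemma Beta_unique p q l : 0 < p -> 0 < q -> improper_01 (beta_integrand p q) l -> Beta p q = l.
Proof.
  intros hp hq H; apply (improper_01_unique (beta_integrand p q));
  auto using continuous_01_beta_integrand.
  now apply Beta_spec.
Qed.

Lemma Beta_1_r p : 0 < p -> Beta p 1 = / p.
Proof.
  intros hp; apply Beta_unique; try lra.
  replace (/ p) with (/ p - 0) by ring.
  apply (improper_01_antiderivative _ (fun t => Rpower t p * / p));
    [apply continuous_01_beta_integrand | | |].
  - intros t ht; unfold beta_integrand; replace (1 - 1) with 0 by ring; rewrite Rpower_O by lra.
    apply (derivable_pt_lim_val _ _ (p * Rpower t (p - 1) / p)); [field; lra|].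
    apply derivable_pt_lim_div_scal, derivable_pt_lim_power; lra.
  - assert (L := limit_mul _ _ _ _ _ _ (limit1_in_Rpower_0 p hp)
                     (limit_free (fun _ => / p) (fun t => 0 < t < 1) 0 0)).
    now rewrite Rmult_0_l in L.
  - assert (L := limit_mul _ _ _ _ _ _
                   (limit1_in_continuity_pt _ (fun t => 0 < t < 1) 1
                      (continuity_pt_Rpower p 1 ltac:(lra)))
                   (limit_free (fun _ => / p) (fun t => 0 < t < 1) 0 1)).
    now rewrite Rpower_base_1, Rmult_1_l in L.
Qed.

(* [(t^p (1 - t)^q)' = (p + q) t^(p-1) (1 - t)^q - q t^(p-1) (1 - t)^(q-1)]. *)
Lemma improper_01_beta_recursion p q : 0 < p -> 0 < q ->
  improper_01 (fun t => beta_integrand p (q + 1) t + (- (q / (p + q))) * beta_integrand p q t) 0.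
Proof.
  intros hp hq.
  set (D := fun t => 0 < t < 1).
  set (F := fun t => Rpower t p * Rpower (1 - t) q / (p + q)).
  assert (hcq : forall x, x < 1 -> continuity_pt (fun t => Rpower (1 - t) q) x)
    by (intros; now apply continuity_pt_Rpower_one_minus).
  replace 0 with (1 * 0 * / (p + q) - 0 * 1 * / (p + q)) by ring.
  apply (improper_01_antiderivative _ F).
  - apply continuous_01_lin; apply continuous_01_beta_integrand.
  - intros t ht; unfold F, beta_integrand.
    apply (derivable_pt_lim_val _ _
      ((p * Rpower t (p - 1) * Rpower (1 - t) q
        + Rpower t p * (q * Rpower (1 - t) (q - 1) * (0 - 1)))
        / (p + q))).
    + rewrite (Rpower_minus_1 t p), (Rpower_minus_1 (1 - t) q) by lra.
      replace (q + 1 - 1) with (q - 1 + 1) by ring; rewrite Rpower_plus, Rpower_1 by lra.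
      field; lra.
    + apply derivable_pt_lim_div_scal.
      apply (derivable_pt_lim_mult (fun t => Rpower t p) (fun t => Rpower (1 - t) q)).
      * apply derivable_pt_lim_power; lra.
      * apply derivable_pt_lim_Rpower_comp; [lra | apply derivable_pt_lim_one_minus].
  - apply limit_mul; [apply limit_mul | apply (limit_free (fun _ => / (p + q)) D 0 0)].
    + now apply limit1_in_Rpower_0.
    + assert (L := limit1_in_continuity_pt _ D 0 (hcq 0 ltac:(lra))); cbv beta in L.
      now rewrite Rminus_0_r, Rpower_base_1 in L.
  - apply limit_mul; [apply limit_mul | apply (limit_free (fun _ => / (p + q)) D 0 1)].
    + assert (L := limit1_in_continuity_pt _ D 1 (continuity_pt_Rpower p 1 ltac:(lra)));
      cbv beta in L.
      now rewrite Rpower_base_1 in L.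
    + now apply limit1_in_Rpower_one_minus_1.
Qed.

Lemma Beta_succ_r p q : 0 < p -> 0 < q -> Beta p (q + 1) = q / (p + q) * Beta p q.
Proof.
  intros hp hq.
  assert (H := improper_01_lin _ _ _ _ (- (q / (p + q)))
                 (continuous_01_beta_integrand p (q + 1)) (continuous_01_beta_integrand p q)
                 (proj1 (Beta_spec p (q + 1) hp ltac:(lra))) (proj1 (Beta_spec p q hp hq))).
  assert (E := improper_01_unique _ _ _
                 (continuous_01_lin _ _ _ (continuous_01_beta_integrand p (q + 1))
                    (continuous_01_beta_integrand p q))
                 H (improper_01_beta_recursion p q hp hq)).
  lra.
Qed.

Lemma Beta_ge0 p q : 0 < p -> 0 < q -> 0 <= Beta p q.
Proof.
  intros hp hq; apply Rle_trans with (integral (beta_integrand p q) (1/4) (3/4));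
  [|apply Beta_spec; lra].
  apply integral_ge0;
  [lra | apply continuous_01_on; [apply continuous_01_beta_integrand | lra | lra] |].
  intros; apply beta_integrand_ge0.
Qed.

Lemma Beta_le_contravar_r p q1 q2 : 0 < p -> 0 < q1 -> q1 <= q2 -> Beta p q2 <= Beta p q1.
Proof.
  intros hp hq h; apply (improper_01_le (beta_integrand p q2) (beta_integrand p q1));
    try apply continuous_01_beta_integrand; try apply Beta_spec; try lra.
  intros t ht; unfold beta_integrand; apply Rmult_le_compat_l; [left; apply Rpower_pos|].
  apply exp_le_exp; assert (ln (1 - t) < 0) by (rewrite <- ln_1; apply ln_increasing; lra); nra.
Qed.

Lemma Beta_le_contravar_l p1 p2 q : 0 < p1 -> p1 <= p2 -> 0 < q -> Beta p2 q <= Beta p1 q.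
Proof.
  intros hp h hq; apply (improper_01_le (beta_integrand p2 q) (beta_integrand p1 q));
    try apply continuous_01_beta_integrand; try apply Beta_spec; try lra.
  intros t ht; unfold beta_integrand; apply Rmult_le_compat_r; [left; apply Rpower_pos|].
  apply exp_le_exp; assert (ln t < 0) by (rewrite <- ln_1; apply ln_increasing; lra); nra.
Qed.

Lemma poch_pos x k : 0 < x -> 0 < poch x k.
Proof. intros hx; induction k; simpl; [lra|]; pose proof (pos_INR k); nra. Qed.

Lemma poch_succ_l x n : poch x (S n) = x * poch (x + 1) n.
Proof.
  induction n; [simpl; ring|].
  change (poch x (S (S n))) with (poch x (S n) * (x + INR (S n))).
  rewrite IHn, S_INR; simpl; ring.
Qed.

Lemma Beta_nat_r x n : 0 < x -> Beta x (INR n + 1) = INR (fact n) / poch x (S n).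
Proof.
  intros hx; induction n.
  - simpl; rewrite Rplus_0_l, Beta_1_r by auto; field; lra.
  - pose proof (pos_INR n); pose proof (poch_pos x (S n) hx).
    rewrite S_INR, Beta_succ_r, IHn by lra.
    change (poch x (S (S n))) with (poch x (S n) * (x + INR (S n))).
    rewrite fact_simpl, mult_INR, S_INR; field; lra.
Qed.

(** * Gauss's limit formula and the Beta-Gamma relation *)

Lemma Bernoulli_ineq y n : -1 <= y -> 1 + INR n * y <= (1 + y) ^ n.
Proof.
  intros hy; induction n; [simpl; lra|].
  rewrite S_INR; simpl; pose proof (pos_INR n).
  assert (0 <= INR n * y * y) by (rewrite Rmult_assoc; apply Rmult_le_pos; nra).
  nra.
Qed.

Lemma exp_pow_INR y n : exp y ^ n = exp (INR n * y).
Proof. rewrite <- Rpower_pow by apply exp_pos; apply Rpower_exp. Qed.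

(* Lower bound from [1 - u <= exp (- u)]; upper bound from [(1 + u)^n <= exp (n u)] together with
   Bernoulli's inequality for [(1 - u^2)^n], where [u = t / n]. *)
Lemma exp_sub_pow_bound n t : (1 <= n)%nat -> 0 < t < INR n ->
  0 <= exp (- t) - (1 - t / INR n) ^ n <= t ^ 2 * exp (- t) / INR n.
Proof.
  intros hn ht; assert (hN : 1 <= INR n) by (apply (le_INR 1); auto).
  set (u := t / INR n).
  assert (hu : 0 < u <= 1).
  { unfold u; split; [apply Rdiv_lt_0_compat; lra|].
    apply (Rmult_le_reg_r (INR n)); [lra|]; unfold Rdiv; rewrite Rmult_assoc, Rinv_l; lra. }
  assert (e1 : exp (- t) = exp (- u) ^ n) by (rewrite exp_pow_INR; f_equal; unfold u; field; lra).
  assert (e2 : exp t = exp u ^ n) by (rewrite exp_pow_INR; f_equal; unfold u; field; lra).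
  assert (hA : (1 - u) ^ n <= exp (- t))
    by (rewrite e1; apply pow_incr; pose proof (exp_ineq1_le (- u)); lra).
  assert (h1 : (1 + u) ^ n <= exp t)
    by (rewrite e2; apply pow_incr; pose proof (exp_ineq1_le u); lra).
  assert (h3 : 1 - t ^ 2 / INR n <= (1 + u) ^ n * (1 - u) ^ n).
  { rewrite <- Rpow_mult_distr.
    replace (1 - t ^ 2 / INR n) with (1 + INR n * (- u ^ 2)) by (unfold u; field; lra).
    replace ((1 + u) * (1 - u)) with (1 + - u ^ 2) by ring.
    apply Bernoulli_ineq; nra. }
  assert (hA0 : 0 <= (1 - u) ^ n) by (apply pow_le; lra).
  assert (hE : exp t * exp (- t) = 1) by (rewrite <- exp_plus, Rplus_opp_r, exp_0; auto).
  pose proof (exp_pos (- t)).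
  assert (h5 : (1 - t ^ 2 / INR n) * exp (- t) <= (1 - u) ^ n).
  { assert ((1 + u) ^ n * (1 - u) ^ n <= exp t * (1 - u) ^ n) by (apply Rmult_le_compat_r; lra).
    apply Rle_trans with (exp t * (1 - u) ^ n * exp (- t)); [apply Rmult_le_compat_r; lra|].
    replace (exp t * (1 - u) ^ n * exp (- t)) with ((exp t * exp (- t)) * (1 - u) ^ n) by ring;
    rewrite hE; lra. }
  split; [lra|]; unfold Rdiv in *; nra.
Qed.

Lemma Un_cv_of_dist_le_div u l C :
  (forall n, (1 <= n)%nat -> Rabs (u n - l) <= C / INR n) -> Un_cv u l.
Proof.
  intros H e he; destruct (INR_unbounded (Rabs C / e)) as [N hN].
  exists (S N); intros n hn; unfold R_dist.
  assert (hpos : 0 < INR n) by (apply lt_0_INR; lia).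
  assert (INR N < INR n) by (apply lt_INR; lia).
  eapply Rle_lt_trans; [apply H; lia|].
  apply (Rmult_lt_reg_r (INR n)); auto; unfold Rdiv; rewrite Rmult_assoc, Rinv_l, Rmult_1_r by lra.
  apply Rle_lt_trans with (Rabs C); [apply Rle_abs|].
  apply (Rmult_lt_reg_r (/ e)); [apply Rinv_0_lt_compat; auto|].
  rewrite (Rmult_comm e), Rmult_assoc, Rinv_r, Rmult_1_r by lra.
  unfold Rdiv in hN; lra.
Qed.

Definition gauss_integrand x (n : nat) t := Rpower t (x - 1) * (1 - t / INR n) ^ n.

Lemma gauss_integrand_derivable x n t : (1 <= n)%nat -> 0 < t ->
  exists l, derivable_pt_lim (gauss_integrand x n) t l.
Proof.
  intros hn ht; eexists.
  apply (derivable_pt_lim_mult (fun t => Rpower t (x - 1)) (fun t => (1 - t / INR n) ^ n)).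
  - now apply derivable_pt_lim_power.
  - apply (derivable_pt_lim_comp (fun t => 1 - t / INR n) (fun u => u ^ n));
    [|apply derivable_pt_lim_pow].
    apply (derivable_pt_lim_minus (fun _ => 1) (fun t => t / INR n));
    [apply derivable_pt_lim_const|].
    apply derivable_pt_lim_div_scal, derivable_pt_lim_id.
Qed.

Lemma continuous_on_gauss_integrand x n a b : (1 <= n)%nat -> 0 < a ->
  continuous_on (gauss_integrand x n) a b.
Proof.
  intros hn ha; apply derivable_continuous_on; intros t ht.
  apply gauss_integrand_derivable; auto; lra.
Qed.

(* Substituting [t = n s] turns the Gauss integrand into the Beta integrand. *)
Lemma integral_gauss_integrand x n a b : 0 < x -> (1 <= n)%nat -> 0 < a <= b -> b < 1 ->
  integral (gauss_integrand x n) (INR n * a) (INR n * b)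
  = Rpower (INR n) x * integral (beta_integrand x (INR n + 1)) a b.
Proof.
  intros hx hn hab hb; assert (hN : 1 <= INR n) by (apply (le_INR 1); auto).
  assert (hc : continuous_on (fun u => gauss_integrand x n (INR n * u) * INR n) a b).
  { apply derivable_continuous_on; intros u hu.
    destruct (gauss_integrand_derivable x n (INR n * u) hn ltac:(nra)) as [l Hl]; eexists.
    apply (derivable_pt_lim_mult (fun u => gauss_integrand x n (INR n * u)) (fun _ => INR n));
      [|apply derivable_pt_lim_const].
    apply (derivable_pt_lim_comp (fun u => INR n * u) (gauss_integrand x n)); [|exact Hl].
    apply (derivable_pt_lim_scal (fun t => t)), derivable_pt_lim_id. }
  rewrite <- (integral_change_of_var (gauss_integrand x n) (fun u => INR n * u) (fun _ => INR n));
    try nra; auto.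
  - rewrite <- integral_scal
      by (lra || (apply continuous_01_on; [apply continuous_01_beta_integrand | lra | lra])).
    apply integral_ext; auto; [lra|]; intros u hu; unfold gauss_integrand, beta_integrand.
    rewrite <- Rpower_mult_distr by lra.
    replace (INR n + 1 - 1) with (INR n) by ring; rewrite Rpower_pow by lra.
    replace (1 - INR n * u / INR n) with (1 - u) by (field; lra).
    rewrite (Rpower_minus_1 (INR n) x) by lra; ring.
  - intros t ht; apply (derivable_pt_lim_val _ _ (INR n * 1)); [ring|].
    apply (derivable_pt_lim_scal (fun t => t)), derivable_pt_lim_id.
  - intros t ht; split; nra.
  - apply continuous_on_gauss_integrand; auto; nra.
Qed.

Lemma gamma_integrand_le_shift x t c : 0 < c <= t ->
  gamma_integrand x t <= gamma_integrand (x + 2) t / c ^ 2.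
Proof.
  intros hc; unfold gamma_integrand.
  replace (x + 2 - 1) with ((x - 1) + INR 2) by (simpl; ring).
  rewrite Rpower_plus, Rpower_pow by lra.
  assert (0 < c ^ 2) by (apply pow_lt; lra).
  apply (Rmult_le_reg_r (c ^ 2)); auto.
  replace (Rpower t (x - 1) * t ^ 2 * exp (- t) / c ^ 2 * c ^ 2)
    with ((Rpower t (x - 1) * exp (- t)) * t ^ 2) by (field; lra).
  assert (c ^ 2 <= t ^ 2) by (apply pow_incr; lra).
  pose proof (Rpower_pos t (x - 1)); pose proof (exp_pos (- t)).
  apply Rmult_le_compat_l; [apply Rmult_le_pos|]; lra.
Qed.

Lemma integral_gamma_tail_le x n B M : 0 < x -> 1 <= INR n -> 3 / 4 * INR n <= B <= M ->
  0 <= integral (gamma_integrand x) B M <= 4 * Gamma (x + 2) / INR n.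
Proof.
  intros hx hN hB.
  assert (cg : forall y, continuous_on (gamma_integrand y) B M)
    by (intros; apply continuous_pos_on; [apply continuous_pos_gamma_integrand | lra]).
  split; [apply integral_ge0; auto; [lra | intros; apply gamma_integrand_ge0]|].
  apply Rle_trans with (integral (fun t => / B ^ 2 * gamma_integrand (x + 2) t) B M).
  - apply integral_le; auto using continuous_on_scal; [lra|].
    intros t ht; rewrite Rmult_comm; apply gamma_integrand_le_shift; lra.
  - rewrite integral_scal; auto; [|lra].
    assert (integral (gamma_integrand (x + 2)) B M <= Gamma (x + 2)) by (apply Gamma_spec; lra).
    assert (hB2 : 0 < B ^ 2) by (apply pow_lt; lra).
    assert (/ B ^ 2 <= 4 / INR n).
    { replace (4 / INR n) with (/ (INR n / 4)) by (field; lra).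
      apply Rinv_le_contravar; [lra | simpl; nra]. }
    pose proof (Rinv_0_lt_compat _ hB2); pose proof (Gamma_pos (x + 2) ltac:(lra)).
    apply Rle_trans with (/ B ^ 2 * Gamma (x + 2)); [apply Rmult_le_compat_l; lra|].
    unfold Rdiv in *; nra.
Qed.

Lemma integral_gamma_sub_gauss_le x n A B : 0 < x -> (1 <= n)%nat -> 0 < A <= B -> B < INR n ->
  0 <= integral (gamma_integrand x) A B - integral (gauss_integrand x n) A B
    <= Gamma (x + 2) / INR n.
Proof.
  intros hx hn hAB hB; assert (hN : 1 <= INR n) by (apply (le_INR 1); auto).
  assert (cg : forall y, continuous_on (gamma_integrand y) A B)
    by (intros; apply continuous_pos_on; [apply continuous_pos_gamma_integrand | lra]).
  assert (ch : continuous_on (gauss_integrand x n) A B)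
    by (apply continuous_on_gauss_integrand; [exact hn | lra]).
  assert (pt : forall t, A < t < B -> gamma_integrand x t - gauss_integrand x n t
                 = Rpower t (x - 1) * (exp (- t) - (1 - t / INR n) ^ n))
    by (intros; unfold gamma_integrand, gauss_integrand; ring).
  rewrite <- integral_minus; auto; [|lra].
  split.
  - apply integral_ge0; [lra | apply continuous_on_minus; auto |].
    intros t ht; rewrite pt by auto; destruct (exp_sub_pow_bound n t hn ltac:(lra)).
    pose proof (Rpower_pos t (x - 1)); nra.
  - apply Rle_trans with (integral (fun t => / INR n * gamma_integrand (x + 2) t) A B).
    + apply integral_le; [lra | apply continuous_on_minus; auto | apply continuous_on_scal; auto |].
      intros t ht; rewrite pt by auto; destruct (exp_sub_pow_bound n t hn ltac:(lra)) as [_ U].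
      unfold gamma_integrand; replace (x + 2 - 1) with ((x - 1) + INR 2) by (simpl; ring).
      rewrite Rpower_plus, Rpower_pow by lra.
      replace (/ INR n * (Rpower t (x - 1) * t ^ 2 * exp (- t)))
        with (Rpower t (x - 1) * (t ^ 2 * exp (- t) / INR n)) by (field; lra).
      apply Rmult_le_compat_l; [left; apply Rpower_pos | lra].
    + rewrite integral_scal; auto; [|lra].
      assert (integral (gamma_integrand (x + 2)) A B <= Gamma (x + 2)) by (apply Gamma_spec; lra).
      assert (0 < / INR n) by (apply Rinv_0_lt_compat; lra); unfold Rdiv; nra.
Qed.

(* On [(n a, n b)] the Gamma integral and the Gauss integral [n^x * int_a^b beta_integrand] differ
   by at most [Gamma (x + 2) / n]; the tail beyond [n b >= 3 n / 4] is at most [4 Gamma (x + 2) / n]. *)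
Lemma Gamma_Beta_approx x n : 0 < x -> (1 <= n)%nat ->
  Rabs (Rpower (INR n) x * Beta x (INR n + 1) - Gamma x) <= 5 * Gamma (x + 2) / INR n.
Proof.
  intros hx hn; assert (hN : 1 <= INR n) by (apply (le_INR 1); auto).
  set (nx := Rpower (INR n) x); assert (hnx : 0 < nx) by apply Rpower_pos.
  apply Rle_plus_epsilon; intros e he.
  destruct (proj1 (Beta_spec x (INR n + 1) hx ltac:(lra)) (e / 2 / nx)) as [dB [hdB KB]];
    [apply Rdiv_lt_0_compat; lra|].
  destruct (proj1 (Gamma_spec x hx) (e / 2) ltac:(lra)) as [dG [MG [hdG [hMG KG]]]].
  assert (hdGn : 0 < dG / INR n) by (apply Rdiv_lt_0_compat; lra).
  pose proof (Rmin_pos _ _ (proj1 hdB) hdGn); pose proof (Rmin_l dB (dG / INR n)).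
  pose proof (Rmin_r dB (dG / INR n)).
  set (a := Rmin dB (dG / INR n) / 2) in *; set (b := 1 - dB / 2).
  assert (ha : 0 < INR n * a < dG).
  { split; [unfold a; nra|].
    apply Rle_lt_trans with (INR n * (dG / INR n / 2)); [apply Rmult_le_compat_l; unfold a; lra|].
    replace (INR n * (dG / INR n / 2)) with (dG / 2) by (field; lra); lra. }
  set (M := Rmax MG (INR n * b) + 1).
  pose proof (Rmax_l MG (INR n * b)); pose proof (Rmax_r MG (INR n * b)).
  specialize (KB a b ltac:(unfold a; lra) ltac:(unfold b; lra)).
  specialize (KG (INR n * a) M ha ltac:(unfold M; lra)).
  rewrite <- (integral_chasles _ _ (INR n * b)) in KG; [|unfold a, b in *; nra | unfold M; lra |
    apply continuous_pos_on; [apply continuous_pos_gamma_integrand | lra]].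
  assert (Htail := integral_gamma_tail_le x n (INR n * b) M hx hN
                    ltac:(unfold M; split; [unfold b; nra | lra])).
  assert (Hdiff := integral_gamma_sub_gauss_le x n (INR n * a) (INR n * b) hx hn
                     ltac:(unfold a, b; split; nra) ltac:(unfold b; nra)).
  rewrite integral_gauss_integrand in Hdiff by (lia || (unfold a, b; lra)).
  fold nx in Hdiff.
  assert (KB' : Rabs (nx * integral (beta_integrand x (INR n + 1)) a b - nx * Beta x (INR n + 1))
                < e / 2).
  { rewrite <- Rmult_minus_distr_l, Rabs_mult, (Rabs_pos_eq nx) by lra.
    apply (Rmult_lt_compat_l nx) in KB; auto.
    now replace (nx * (e / 2 / nx)) with (e / 2) in KB by (field; lra). }
  apply Rabs_def2 in KG; apply Rabs_def2 in KB'; apply Rabs_le; split; unfold Rdiv in *; lra.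
Qed.

Lemma Un_cv_Gamma_Beta x : 0 < x ->
  Un_cv (fun n => Rpower (INR n) x * Beta x (INR n + 1)) (Gamma x).
Proof.
  intros hx; apply (Un_cv_of_dist_le_div _ _ (5 * Gamma (x + 2))); intros n hn.
  now apply Gamma_Beta_approx.
Qed.

Definition gauss_seq x n := Rpower (INR n) x * (INR (fact n) / poch x (S n)).

Lemma Un_cv_gauss_seq x : 0 < x -> Un_cv (gauss_seq x) (Gamma x).
Proof.
  intros hx; apply (Un_cv_ext (fun n => Rpower (INR n) x * Beta x (INR n + 1))).
  - intros n; unfold gauss_seq; now rewrite Beta_nat_r.
  - now apply Un_cv_Gamma_Beta.
Qed.

Lemma Un_cv_ext_ge1 u v l : (forall n, (1 <= n)%nat -> u n = v n) -> Un_cv u l -> Un_cv v l.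
Proof.
  intros E H e he; destruct (H e he) as [N HN]; exists (S N); intros n hn.
  rewrite <- E by lia; apply HN; lia.
Qed.

Lemma Un_cv_const c : Un_cv (fun _ => c) c.
Proof. intros e he; exists O; intros; unfold R_dist; now rewrite Rminus_diag, Rabs_R0. Qed.

Lemma Un_cv_inv u l : Un_cv u l -> l <> 0 -> Un_cv (fun n => / u n) (/ l).
Proof.
  intros H hl; apply (continuity_seq Rinv u l); auto.
  apply (continuity_pt_inv (fun x => x)); auto; apply derivable_continuous_pt, derivable_pt_id.
Qed.

Lemma Un_cv_squeeze u v w l : (forall n, u n <= v n <= w n) -> Un_cv u l -> Un_cv w l -> Un_cv v l.
Proof.
  intros H Hu Hw e he; destruct (Hu e he) as [N1 H1]; destruct (Hw e he) as [N2 H2].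
  exists (max N1 N2); intros n hn; specialize (H1 n ltac:(lia)); specialize (H2 n ltac:(lia)).
  unfold R_dist in *; specialize (H n); apply Rabs_def2 in H1; apply Rabs_def2 in H2.
  apply Rabs_def1; lra.
Qed.

Lemma Un_cv_mult_div x c : 0 <= c -> Un_cv (fun n => INR n * x / (c + INR n)) x.
Proof.
  intros hc; apply (Un_cv_of_dist_le_div _ _ (Rabs x * c)); intros n hn.
  assert (hN : 1 <= INR n) by (apply (le_INR 1); auto).
  replace (INR n * x / (c + INR n) - x) with (- (x * c / (c + INR n))) by (field; lra).
  rewrite Rabs_Ropp; unfold Rdiv.
  rewrite !Rabs_mult, Rabs_inv, (Rabs_pos_eq c), (Rabs_pos_eq (c + INR n)) by lra.
  rewrite !Rmult_assoc; apply Rmult_le_compat_l; [apply Rabs_pos|].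
  apply Rmult_le_compat_l; [lra|]; apply Rinv_le_contravar; lra.
Qed.

Lemma Gamma_succ x : 0 < x -> Gamma (x + 1) = x * Gamma x.
Proof.
  intros hx.
  assert (H : Un_cv (fun n => gauss_seq x n * (INR n * x / (x + 1 + INR n))) (Gamma x * x))
    by (apply CV_mult; [apply Un_cv_gauss_seq | apply Un_cv_mult_div]; lra).
  rewrite Rmult_comm; apply (UL_sequence (gauss_seq (x + 1))); [now apply Un_cv_gauss_seq; lra|].
  eapply Un_cv_ext_ge1; [|exact H]; intros n hn.
  assert (hN : 1 <= INR n) by (apply (le_INR 1); auto).
  pose proof (poch_pos (x + 1) n ltac:(lra)); pose proof (INR_fact_lt_0 n).
  unfold gauss_seq; rewrite (poch_succ_l x n).
  change (poch (x + 1) (S n)) with (poch (x + 1) n * (x + 1 + INR n)).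
  rewrite (Rpower_minus_1 (INR n) (x + 1)) by lra; replace (x + 1 - 1) with x by ring.
  field; lra.
Qed.

Lemma Gamma_plus_INR z k : 0 < z -> Gamma (z + INR k) = poch z k * Gamma z.
Proof.
  intros hz; induction k; [simpl; rewrite Rplus_0_r; ring|].
  rewrite S_INR; replace (z + (INR k + 1)) with ((z + INR k) + 1) by ring.
  rewrite Gamma_succ by (pose proof (pos_INR k); lra); rewrite IHk; simpl; ring.
Qed.

Lemma Beta_plus_INR_r x y n : 0 < x -> 0 < y ->
  Beta x y = poch (x + y) n / poch y n * Beta x (y + INR n).
Proof.
  intros hx hy; induction n; [simpl; rewrite Rplus_0_r; field|].
  rewrite IHn, S_INR; replace (y + (INR n + 1)) with ((y + INR n) + 1) by ring.
  pose proof (pos_INR n); pose proof (poch_pos (x + y) n ltac:(lra)); pose proof (poch_pos y n hy).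
  rewrite Beta_succ_r by lra; simpl; field; repeat split; lra.
Qed.

Lemma Un_cv_Gamma_Beta_shift x K : 0 < x ->
  Un_cv (fun n => Rpower (INR n) x * Beta x (INR (n + K) + 1)) (Gamma x).
Proof.
  intros hx.
  assert (A1 : Un_cv (fun n => INR n / INR (n + K)) 1).
  { apply (Un_cv_of_dist_le_div _ _ (INR K)); intros n hn.
    assert (hN : 1 <= INR n) by (apply (le_INR 1); auto).
    rewrite plus_INR; pose proof (pos_INR K).
    replace (INR n / (INR n + INR K) - 1) with (- (INR K / (INR n + INR K))) by (field; lra).
    rewrite Rabs_Ropp, Rabs_pos_eq
      by (unfold Rdiv; apply Rmult_le_pos; [lra | left; apply Rinv_0_lt_compat; lra]).
    unfold Rdiv; apply Rmult_le_compat_l; [lra | apply Rinv_le_contravar; lra]. }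
  assert (A2 : Un_cv (fun n => Rpower (INR n / INR (n + K)) x) 1).
  { rewrite <- (Rpower_base_1 x); apply (continuity_seq (fun t => Rpower t x)); auto.
    apply continuity_pt_Rpower; lra. }
  assert (A := CV_mult _ _ _ _ A2 (CV_shift' _ K _ (Un_cv_Gamma_Beta x hx))).
  rewrite Rmult_1_l in A; eapply Un_cv_ext_ge1; [|exact A]; intros n hn; cbv beta.
  assert (0 < INR n) by (apply lt_0_INR; lia).
  assert (0 < INR (n + K)) by (rewrite plus_INR; pose proof (pos_INR K); lra).
  rewrite <- Rmult_assoc, Rpower_mult_distr by (try apply Rdiv_lt_0_compat; lra).
  f_equal; f_equal; field; lra.
Qed.

(* Squeezed, by monotonicity of [Beta] in its second argument, between
   [Un_cv_Gamma_Beta_shift] and [Un_cv_Gamma_Beta]. *)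
Lemma Un_cv_Gamma_Beta_plus x y : 0 < x -> 0 < y ->
  Un_cv (fun n => Rpower (INR n) x * Beta x (y + INR (S n))) (Gamma x).
Proof.
  intros hx hy; destruct (INR_unbounded y) as [K hK].
  apply (Un_cv_squeeze (fun n => Rpower (INR n) x * Beta x (INR (n + K) + 1)) _
           (fun n => Rpower (INR n) x * Beta x (INR n + 1)));
    [| now apply Un_cv_Gamma_Beta_shift | now apply Un_cv_Gamma_Beta].
  intros n; pose proof (Rpower_pos (INR n) x); pose proof (pos_INR n).
  rewrite S_INR, plus_INR.
  split; apply Rmult_le_compat_l; try lra; apply Beta_le_contravar_r; lra.
Qed.

Lemma Beta_Gamma x y : 0 < x -> 0 < y -> Beta x y = Gamma x * Gamma y / Gamma (x + y).
Proof.
  intros hx hy.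
  assert (HW : Un_cv (fun n => gauss_seq y n * / gauss_seq (x + y) n
                               * (Rpower (INR n) x * Beta x (y + INR (S n))))
                 (Gamma y * / Gamma (x + y) * Gamma x)).
  { apply CV_mult; [apply CV_mult | now apply Un_cv_Gamma_Beta_plus]; [now apply Un_cv_gauss_seq|].
    apply Un_cv_inv; [apply Un_cv_gauss_seq; lra | apply Rgt_not_eq, Gamma_pos; lra]. }
  replace (Gamma x * Gamma y / Gamma (x + y)) with (Gamma y * / Gamma (x + y) * Gamma x)
    by (unfold Rdiv; ring).
  apply (UL_sequence (fun _ => Beta x y)); [apply Un_cv_const|].
  eapply Un_cv_ext_ge1; [|exact HW]; intros n hn.
  assert (0 < INR n) by (apply lt_0_INR; lia).
  pose proof (poch_pos (x + y) (S n) ltac:(lra)); pose proof (poch_pos y (S n) hy).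
  pose proof (INR_fact_lt_0 n); pose proof (Rpower_pos (INR n) x).
  pose proof (Rpower_pos (INR n) y).
  unfold gauss_seq; rewrite (Beta_plus_INR_r x y (S n)), Rpower_plus by auto.
  field; repeat split; lra.
Qed.

(** * Term-by-term integration of the exponential series *)

Definition beta2_integrand P Q t := Rpower t (2 * P - 1) * Rpower (1 - t ^ 2) (Q - 1).

Lemma continuous_01_beta2_integrand P Q : continuous_01 (beta2_integrand P Q).
Proof.
  intros t ht.
  apply (continuity_pt_mult (fun t => Rpower t (2 * P - 1)) (fun t => Rpower (1 - t ^ 2) (Q - 1))).
  - apply continuity_pt_Rpower; lra.
  - eapply derivable_pt_lim_continuity_pt; apply derivable_pt_lim_Rpower_comp; [nra|].
    apply (derivable_pt_lim_minus (fun _ => 1) (fun t => t ^ 2));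
    [apply derivable_pt_lim_const | apply derivable_pt_lim_pow].
Qed.

Lemma integral_beta2_integrand P Q a b : 0 < a <= b -> b < 1 ->
  integral (beta2_integrand P Q) a b = / 2 * integral (beta_integrand P Q) (a ^ 2) (b ^ 2).
Proof.
  intros hab hb.
  assert (cc : continuous_on (fun t => beta_integrand P Q (t ^ 2) * (2 * t)) a b).
  { apply derivable_continuous_on; intros t ht; eexists.
    apply (derivable_pt_lim_mult (fun t => beta_integrand P Q (t ^ 2)) (fun t => 2 * t));
      [|apply (derivable_pt_lim_scal (fun t => t)), derivable_pt_lim_id].
    apply (derivable_pt_lim_comp (fun t => t ^ 2) (beta_integrand P Q));
    [apply derivable_pt_lim_pow|].
    apply (derivable_pt_lim_mult (fun t => Rpower t (P - 1)) (fun t => Rpower (1 - t) (Q - 1))).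
    - apply derivable_pt_lim_power; nra.
    - apply derivable_pt_lim_Rpower_comp; [nra | apply derivable_pt_lim_one_minus]. }
  rewrite <- (integral_change_of_var (beta_integrand P Q) (fun t => t ^ 2) (fun t => 2 * t)); auto;
  try nra.
  - rewrite <- integral_scal by (lra || auto).
    apply integral_ext;
    [lra | apply continuous_01_on; [apply continuous_01_beta2_integrand | lra | lra] |].
    intros t ht; unfold beta2_integrand, beta_integrand; rewrite Rpower_sqr by lra.
    replace (2 * P - 1) with (2 * (P - 1) + 1) by ring; rewrite Rpower_plus, Rpower_1 by lra; field.
  - intros t ht; apply (derivable_pt_lim_val _ _ (INR 2 * t ^ 1));
    [simpl; ring | apply derivable_pt_lim_pow].
  - intros t ht; split; apply pow_incr; lra.
  - apply continuous_01_on; [apply continuous_01_beta_integrand | nra | nra].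
Qed.

Lemma improper_01_beta2_integrand P Q : 0 < P -> 0 < Q ->
  improper_01 (beta2_integrand P Q) (Beta P Q / 2) /\
  forall a b, 0 < a <= b -> b < 1 -> integral (beta2_integrand P Q) a b <= Beta P Q / 2.
Proof.
  intros hP hQ; destruct (Beta_spec P Q hP hQ) as [BI Ble]; split.
  - intros e he; destruct (BI (2 * e) ltac:(lra)) as [d [hd K]].
    exists (d / 2); split; [lra|]; intros a b ha hb.
    rewrite integral_beta2_integrand by lra.
    replace (/ 2 * integral (beta_integrand P Q) (a ^ 2) (b ^ 2) - Beta P Q / 2)
      with (/ 2 * (integral (beta_integrand P Q) (a ^ 2) (b ^ 2) - Beta P Q)) by field.
    rewrite Rabs_mult, Rabs_pos_eq by lra.
    assert (Rabs (integral (beta_integrand P Q) (a ^ 2) (b ^ 2) - Beta P Q) < 2 * e)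
      by (apply K; split; nra).
    lra.
  - intros a b hab hb; rewrite integral_beta2_integrand by lra.
    assert (integral (beta_integrand P Q) (a ^ 2) (b ^ 2) <= Beta P Q) by (apply Ble; nra); lra.
Qed.

Lemma Un_cv_exp x : Un_cv (sum_f_R0 (fun i => / INR (fact i) * x ^ i)) (exp x).
Proof. exact (proj2_sig (exist_exp x)). Qed.

Lemma sum_f_R0_tail_le (al be : nat -> R) M j : (forall n, Rabs (al n) <= be n) ->
  Rabs (sum_f_R0 al (M + j) - sum_f_R0 al M) <= sum_f_R0 be (M + j) - sum_f_R0 be M.
Proof.
  intros H; induction j; [rewrite Nat.add_0_r, !Rminus_diag, Rabs_R0; lra|].
  replace (M + S j)%nat with (S (M + j)) by lia; rewrite !tech5.
  replace (sum_f_R0 al (M + j) + al (S (M + j)) - sum_f_R0 al M)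
    with ((sum_f_R0 al (M + j) - sum_f_R0 al M) + al (S (M + j))) by ring.
  eapply Rle_trans; [apply Rabs_triang|]; specialize (H (S (M + j))); lra.
Qed.

Definition exp_taylor y M t := sum_f_R0 (fun n => (- y) ^ n / INR (fact n) * t ^ n) M.

(* Termwise, [|(- y t)^n / n!| <= y^n / n!] for [0 <= t <= 1]. *)
Lemma exp_taylor_remainder_le y t M : 0 <= y -> 0 <= t <= 1 ->
  Rabs (exp (- (y * t)) - exp_taylor y M t) <= exp y - sum_f_R0 (fun i => / INR (fact i) * y ^ i) M.
Proof.
  intros hy ht.
  set (al := fun i => / INR (fact i) * (- (y * t)) ^ i).
  set (be := fun i => / INR (fact i) * y ^ i).
  replace (exp_taylor y M t) with (sum_f_R0 al M).
  2:{ apply sum_eq; intros i _; unfold al; replace (- (y * t)) with ((- y) * t) by ring.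
      rewrite Rpow_mult_distr; unfold Rdiv; ring. }
  assert (Hab : forall n, Rabs (al n) <= be n).
  { intros n; unfold al, be; rewrite Rabs_mult, Rabs_inv, (Rabs_pos_eq (INR _)) by apply pos_INR.
    apply Rmult_le_compat_l; [left; apply Rinv_0_lt_compat, INR_fact_lt_0|].
    rewrite <- RPow_abs; apply pow_incr; split; [apply Rabs_pos|].
    rewrite Rabs_Ropp, Rabs_mult, !Rabs_pos_eq by lra; nra. }
  assert (tail : forall u l, Un_cv (sum_f_R0 u) l -> Un_cv (fun j => sum_f_R0 u (M + j)) l).
  { intros u l H; apply (Un_cv_ext (fun j => sum_f_R0 u (j + M)));
      [intros; now rewrite Nat.add_comm|].
    now apply CV_shift'. }
  apply Rle_cv_lim with (Un := fun j => Rabs (sum_f_R0 al (M + j) - sum_f_R0 al M))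
                        (Vn := fun j => sum_f_R0 be (M + j) - sum_f_R0 be M).
  - intros j; now apply sum_f_R0_tail_le.
  - apply cv_cvabs, (CV_minus _ (fun _ => sum_f_R0 al M));
    [apply tail, Un_cv_exp | apply Un_cv_const].
  - apply (CV_minus _ (fun _ => sum_f_R0 be M)); [apply tail, Un_cv_exp | apply Un_cv_const].
Qed.

Lemma continuous_on_exp_taylor y M a b : continuous_on (exp_taylor y M) a b.
Proof. apply continuous_on_sum; intros; apply continuous_on_scal, continuous_on_pow. Qed.

Lemma continuous_on_exp_opp_mult y a b : continuous_on (fun t => exp (- (y * t))) a b.
Proof.
  intros t ht; apply (continuity_pt_ext (fun t => exp ((- y) * t))); [intros; f_equal; ring|].
  apply continuity_pt_exp_lin.
Qed.

Lemma integral_mult_exp_split w y M a b : a <= b -> continuous_on w a b ->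
  integral (fun t => w t * exp (- (y * t))) a b =
  sum_f_R0 (fun n => (- y) ^ n / INR (fact n) * integral (fun t => w t * t ^ n) a b) M
  + integral (fun t => w t * (exp (- (y * t)) - exp_taylor y M t)) a b.
Proof.
  intros hab cw.
  assert (cg : forall n, continuous_on (fun t => w t * t ^ n) a b)
    by (intros; apply continuous_on_mult; auto using continuous_on_pow).
  replace (sum_f_R0 (fun n => (- y) ^ n / INR (fact n) * integral (fun t => w t * t ^ n) a b) M)
    with (integral (fun t => sum_f_R0 (fun n => (- y) ^ n / INR (fact n) * (w t * t ^ n)) M) a b).
  2:{ rewrite integral_sum; auto; [|intros; apply continuous_on_scal; auto].
      apply sum_eq; intros; apply integral_scal; auto. }
  rewrite <- integral_plus; auto.
  - f_equal; apply functional_extensionality; intros t; unfold exp_taylor.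
    replace (sum_f_R0 (fun n => (- y) ^ n / INR (fact n) * (w t * t ^ n)) M)
      with (w t * sum_f_R0 (fun n => (- y) ^ n / INR (fact n) * t ^ n) M)
      by (rewrite scal_sum; apply sum_eq; intros; ring).
    ring.
  - apply continuous_on_sum; intros; apply continuous_on_scal; auto.
  - apply continuous_on_mult; auto; apply continuous_on_minus;
      [apply continuous_on_exp_opp_mult | apply continuous_on_exp_taylor].
Qed.

Lemma abs_integral_mult_exp_remainder_le w y M a b J0 : 0 <= y -> 0 <= a <= b -> b <= 1 ->
  continuous_on w a b -> (forall t, a < t < b -> 0 <= w t) -> integral w a b <= J0 ->
  Rabs (integral (fun t => w t * (exp (- (y * t)) - exp_taylor y M t)) a b)
    <= (exp y - sum_f_R0 (fun i => / INR (fact i) * y ^ i) M) * J0.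
Proof.
  intros hy hab hb cw hw hJ0.
  set (R := exp y - sum_f_R0 (fun i => / INR (fact i) * y ^ i) M).
  assert (hR : 0 <= R).
  { pose proof (exp_taylor_remainder_le y 0 M hy ltac:(lra)).
    pose proof (Rabs_pos (exp (- (y * 0)) - exp_taylor y M 0)); unfold R; lra. }
  assert (cr : continuous_on (fun t => w t * (exp (- (y * t)) - exp_taylor y M t)) a b).
  { apply continuous_on_mult; auto; apply continuous_on_minus;
      [apply continuous_on_exp_opp_mult | apply continuous_on_exp_taylor]. }
  eapply Rle_trans; [apply abs_integral_le; auto; lra|].
  apply Rle_trans with (integral (fun t => R * w t) a b).
  - apply integral_le; [lra | apply continuous_on_abs; auto | apply continuous_on_scal; auto |].
    intros t ht; rewrite Rabs_mult, (Rabs_pos_eq (w t)), Rmult_comm by (apply hw; lra).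
    apply Rmult_le_compat_r; [apply hw; lra | apply exp_taylor_remainder_le; auto; lra].
  - rewrite integral_scal by (lra || auto); apply Rmult_le_compat_l; auto.
Qed.

Lemma Rabs_sum_mult_sub_le (c u v : nat -> R) M eta :
  (forall n, (n <= M)%nat -> Rabs (u n - v n) < eta) ->
  Rabs (sum_f_R0 (fun n => c n * u n) M - sum_f_R0 (fun n => c n * v n) M)
    <= eta * sum_f_R0 (fun n => Rabs (c n)) M.
Proof.
  intros H; rewrite <- minus_sum; eapply Rle_trans; [apply sum_f_R0_triangle|].
  rewrite scal_sum; apply sum_Rle; intros n hn.
  rewrite <- Rmult_minus_distr_l, Rabs_mult.
  apply Rmult_le_compat_l; [apply Rabs_pos | left; apply H; auto].
Qed.

Lemma improper_01_uniform (g : nat -> R -> R) (l : nat -> R) :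
  (forall n, improper_01 (g n) (l n)) ->
  forall M eta, 0 < eta -> exists d, 0 < d <= 1/2 /\ forall a b, 0 < a < d -> 1 - d < b < 1 ->
    forall n, (n <= M)%nat -> Rabs (integral (g n) a b - l n) < eta.
Proof.
  intros H M eta he; induction M.
  - destruct (H O eta he) as [d [hd K]]; exists d; split; auto; intros a b ha hb n hn.
    replace n with O by lia; auto.
  - destruct IHM as [d1 [hd1 K1]]; destruct (H (S M) eta he) as [d2 [hd2 K2]].
    pose proof (Rmin_pos d1 d2 ltac:(lra) ltac:(lra)); pose proof (Rmin_l d1 d2).
    pose proof (Rmin_r d1 d2).
    exists (Rmin d1 d2); split; [lra|]; intros a b ha hb n hn.
    destruct (Nat.eq_dec n (S M)) as [->|ne]; [apply K2 | apply K1]; try lra; lia.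
Qed.

(* Term-by-term integration; only odd-order partial sums are required, as that is what the
   even/odd splitting of the final series provides. *)
Lemma improper_01_mult_exp (w : R -> R) (J : nat -> R) (J0 y L : R) :
  continuous_01 w -> (forall t, 0 < t < 1 -> 0 <= w t) -> 0 <= y ->
  (forall n, improper_01 (fun t => w t * t ^ n) (J n)) ->
  (forall a b, 0 < a <= b -> b < 1 -> integral w a b <= J0) ->
  Un_cv (fun N => sum_f_R0 (fun n => (- y) ^ n / INR (fact n) * J n) (2 * N + 1)) L ->
  improper_01 (fun t => w t * exp (- (y * t))) L.
Proof.
  intros hw hw0 hy HJ HJ0 HL e he.
  assert (hJ0 : 0 <= J0).
  { apply Rle_trans with (integral w (1/2) (1/2)); [|apply HJ0; lra].
    apply integral_ge0; [lra | apply continuous_01_on; auto; lra | intros; lra]. }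
  destruct (HL (e / 3) ltac:(lra)) as [N1 HN1].
  destruct (Un_cv_exp y (e / (3 * (J0 + 1))) ltac:(apply Rdiv_lt_0_compat; lra)) as [N2 HN2].
  set (M := (2 * max N1 N2 + 1)%nat).
  specialize (HN1 (max N1 N2) ltac:(lia)); specialize (HN2 M ltac:(unfold M; lia)).
  unfold R_dist in HN1, HN2; fold M in HN1.
  set (Yc := sum_f_R0 (fun n => Rabs ((- y) ^ n / INR (fact n))) M).
  assert (hYc : 0 <= Yc) by (apply cond_pos_sum; intros; apply Rabs_pos).
  set (eta := e / (3 * (Yc + 1))).
  assert (heta : 0 < eta) by (apply Rdiv_lt_0_compat; lra).
  destruct (improper_01_uniform (fun n t => w t * t ^ n) J HJ M eta heta) as [d [hd Hd]].
  exists d; split; auto; intros a b ha hb; specialize (Hd a b ha hb).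
  assert (cw : continuous_on w a b) by (apply continuous_01_on; auto; lra).
  rewrite (integral_mult_exp_split w y M a b) by (lra || auto).
  assert (Hrem := abs_integral_mult_exp_remainder_le w y M a b J0 hy ltac:(lra) ltac:(lra) cw
                  ltac:(intros; apply hw0; lra) ltac:(apply HJ0; lra)).
  assert (Hsum := Rabs_sum_mult_sub_le (fun n => (- y) ^ n / INR (fact n))
                  (fun n => integral (fun t => w t * t ^ n) a b) J M eta Hd).
  cbv beta in Hsum; fold Yc in Hsum.
  assert (Hsum_small : eta * Yc < e / 3).
  { apply Rlt_le_trans with (eta * (Yc + 1)); [apply Rmult_lt_compat_l; lra|].
    unfold eta; right; field; lra. }
  assert (Hrem_small : (exp y - sum_f_R0 (fun i => / INR (fact i) * y ^ i) M) * J0 < e / 3).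
  { rewrite Rabs_minus_sym in HN2; apply Rabs_def2 in HN2.
    apply Rle_lt_trans with (e / (3 * (J0 + 1)) * J0); [apply Rmult_le_compat_r; lra|].
    apply Rlt_le_trans with (e / (3 * (J0 + 1)) * (J0 + 1));
      [apply Rmult_lt_compat_l; [apply Rdiv_lt_0_compat|]; lra | right; field; lra]. }
  set (SJ := sum_f_R0 (fun n => (- y) ^ n / INR (fact n) * J n) M) in *.
  match goal with |- Rabs (?S + ?Rm - L) < e =>
    replace (S + Rm - L) with ((S - SJ) + Rm + (SJ - L)) by ring end.
  eapply Rle_lt_trans; [apply Rabs_triang|].
  eapply Rle_lt_trans; [apply Rplus_le_compat_r, Rabs_triang|]; lra.
Qed.

(** * The hypergeometric series *)

Lemma fact_double k : INR (fact (2 * k)) = 4 ^ k * INR (fact k) * poch (1 / 2) k.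
Proof.
  induction k; [simpl; ring|].
  replace (2 * S k)%nat with (S (S (2 * k))) by lia.
  rewrite !fact_simpl, !mult_INR, IHk; simpl poch; rewrite !S_INR, mult_INR; simpl; field.
Qed.

Lemma fact_double_succ k : INR (fact (2 * k + 1)) = 4 ^ k * INR (fact k) * poch (3 / 2) k.
Proof.
  induction k; [simpl; ring|].
  replace (2 * S k + 1)%nat with (S (S (2 * k + 1))) by lia.
  rewrite !fact_simpl, !mult_INR, IHk; simpl poch; rewrite !S_INR, plus_INR, mult_INR; simpl; field.
Qed.

Lemma sum_f_R0_even_odd g N :
  sum_f_R0 g (2 * N + 1) = sum_f_R0 (fun k => g (2 * k)%nat + g (2 * k + 1)%nat) N.
Proof.
  induction N; [simpl; ring|].
  replace (2 * S N + 1)%nat with (S (S (2 * N + 1))) by lia.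
  rewrite (tech5 g (S (2 * N + 1))), (tech5 g (2 * N + 1)), IHN, (tech5 _ N).
  replace (S (2 * N + 1)) with (2 * S N)%nat by lia.
  replace (S (2 * S N)) with (2 * S N + 1)%nat by lia; ring.
Qed.

Definition hyp1F2_term a b1 b2 z k := poch a k / (poch b1 k * poch b2 k) * z ^ k / INR (fact k).

Lemma hyp1F2_term_ge0 a b1 b2 z k : 0 < a -> 0 < b1 -> 0 < b2 -> 0 <= z ->
  0 <= hyp1F2_term a b1 b2 z k.
Proof.
  intros; pose proof (poch_pos a k); pose proof (poch_pos b1 k); pose proof (poch_pos b2 k).
  pose proof (INR_fact_lt_0 k); assert (0 <= z ^ k) by (apply pow_le; lra).
  unfold hyp1F2_term, Rdiv; apply Rmult_le_pos; [|left; apply Rinv_0_lt_compat; lra].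
  apply Rmult_le_pos; auto; apply Rmult_le_pos; [lra|]; left; apply Rinv_0_lt_compat; nra.
Qed.

(* Comparison with the exponential series; the sum is then the one chosen by [hyp1F2]. *)
Lemma Un_cv_hyp1F2 a b1 b2 z A C D : 0 < a -> 0 < b1 -> 0 < b2 -> 0 <= z -> 0 < A ->
  (forall k, A * hyp1F2_term a b1 b2 z k <= C * (D ^ k / INR (fact k))) ->
  Un_cv (sum_f_R0 (hyp1F2_term a b1 b2 z)) (hyp1F2 a b1 b2 z).
Proof.
  intros ha hb1 hb2 hz hA Hle.
  assert (Hexp : {l | Un_cv (sum_f_R0 (fun k => D ^ k / INR (fact k) * (C / A))) l}).
  { destruct (exist_exp D) as [l Hl]; exists (l * (C / A)).
    apply (Un_cv_ext (fun N => sum_f_R0 (fun i => / INR (fact i) * D ^ i) N * (C / A))).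
    - intros N; rewrite Rmult_comm, scal_sum; apply sum_eq; intros; unfold Rdiv; ring.
    - apply CV_mult; [exact Hl | apply Un_cv_const]. }
  assert (Hcomp : forall k, 0 <= hyp1F2_term a b1 b2 z k <= D ^ k / INR (fact k) * (C / A)).
  { intros k; split; [now apply hyp1F2_term_ge0|].
    apply (Rmult_le_reg_l A); auto.
    replace (A * (D ^ k / INR (fact k) * (C / A))) with (C * (D ^ k / INR (fact k)))
      by (field; split; [lra | apply INR_fact_neq_0]).
    apply Hle. }
  destruct (Rseries_CV_comp _ _ Hcomp Hexp) as [l Hl].
  replace (hyp1F2 a b1 b2 z) with l; auto.
  apply (UL_sequence (sum_f_R0 (hyp1F2_term a b1 b2 z))); auto.
  apply (epsilon_spec (inhabits 0) (fun l => infinite_sum (hyp1F2_term a b1 b2 z) l)); eauto.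
Qed.

Lemma beta2_integrand_mult_pow P Q n t : 0 < t ->
  beta2_integrand P Q t * t ^ n = beta2_integrand (P + INR n / 2) Q t.
Proof.
  intros ht; unfold beta2_integrand.
  replace (2 * (P + INR n / 2) - 1) with ((2 * P - 1) + INR n) by field.
  rewrite Rpower_plus, Rpower_pow by lra; ring.
Qed.

Lemma Beta_plus_INR_l p q k : 0 < p -> 0 < q ->
  Beta (p + INR k) q = poch p k * Gamma p * Gamma q / (poch (p + q) k * Gamma (p + q)).
Proof.
  intros hp hq; pose proof (pos_INR k).
  rewrite Beta_Gamma, Gamma_plus_INR by lra.
  replace (p + INR k + q) with ((p + q) + INR k) by ring; rewrite Gamma_plus_INR by lra;
  reflexivity.
Qed.

Section Moments.
Variables p q z : R.
Hypotheses (hp : 0 < p) (hq : 0 < q) (hz : 0 <= z).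

(* The moments of [beta2_integrand p q] (see [beta2_integrand_mult_pow]). *)
Let J (n : nat) := Beta (p + INR n / 2) q / 2.

Lemma even_moment_term k :
  (4 * z) ^ k / INR (fact (2 * k)) * J (2 * k)
  = Gamma q * Gamma p / (2 * Gamma (p + q)) * hyp1F2_term p (1 / 2) (p + q) z k.
Proof.
  unfold J, hyp1F2_term; rewrite Rpow_mult_distr, fact_double, mult_INR.
  replace (INR 2 * INR k / 2) with (INR k) by (simpl; field).
  rewrite Beta_plus_INR_l by auto.
  pose proof (poch_pos (1 / 2) k ltac:(lra)); pose proof (poch_pos (p + q) k ltac:(lra)).
  pose proof (INR_fact_lt_0 k); pose proof (pow_lt 4 k ltac:(lra)).
  pose proof (Gamma_pos (p + q) ltac:(lra)).
  field; repeat split; lra.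
Qed.

Lemma odd_moment_term k :
  (4 * z) ^ k / INR (fact (2 * k + 1)) * J (2 * k + 1)
  = Gamma q * Gamma (p + 1 / 2) / (2 * Gamma (p + q + 1 / 2))
    * hyp1F2_term (p + 1 / 2) (3 / 2) (p + q + 1 / 2) z k.
Proof.
  unfold J, hyp1F2_term; rewrite Rpow_mult_distr, fact_double_succ, plus_INR, mult_INR.
  replace (p + (INR 2 * INR k + INR 1) / 2) with ((p + 1 / 2) + INR k) by (simpl; field).
  rewrite Beta_plus_INR_l by lra; replace (p + 1 / 2 + q) with (p + q + 1 / 2) by ring.
  pose proof (poch_pos (3 / 2) k ltac:(lra)); pose proof (poch_pos (p + q + 1 / 2) k ltac:(lra)).
  pose proof (INR_fact_lt_0 k); pose proof (pow_lt 4 k ltac:(lra)).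
  pose proof (Gamma_pos (p + q + 1 / 2) ltac:(lra)).
  field; repeat split; lra.
Qed.

Lemma moment_term_le j k : (k <= j)%nat ->
  (4 * z) ^ k / INR (fact j) * J j <= Beta p q / 2 * ((4 * z) ^ k / INR (fact k)).
Proof.
  intros hkj; pose proof (INR_fact_lt_0 k); pose proof (pow_le (4 * z) k ltac:(lra)).
  pose proof (pos_INR j).
  assert (0 <= J j <= Beta p q / 2).
  { unfold J; pose proof (Beta_ge0 (p + INR j / 2) q ltac:(lra) hq).
    pose proof (Beta_le_contravar_l p (p + INR j / 2) q hp ltac:(lra) hq); lra. }
  assert (INR (fact k) <= INR (fact j)) by (apply le_INR, fact_le; lia).
  rewrite Rmult_comm; apply Rmult_le_compat; try lra.
  - unfold Rdiv; apply Rmult_le_pos; [lra | left; apply Rinv_0_lt_compat; lra].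
  - unfold Rdiv; apply Rmult_le_compat_l; [lra | apply Rinv_le_contravar; lra].
Qed.

End Moments.

Lemma improper_01_beta2_exp p q y : 0 < p -> 0 < q -> 0 <= y ->
  improper_01 (fun t => beta2_integrand p q t * exp (- (y * t)))
    (Gamma q * Gamma p / (2 * Gamma (p + q)) * hyp1F2 p (1 / 2) (p + q) (y ^ 2 / 4)
     - y * (Gamma q * Gamma (p + 1 / 2) / (2 * Gamma (p + q + 1 / 2)))
         * hyp1F2 (p + 1 / 2) (3 / 2) (p + q + 1 / 2) (y ^ 2 / 4)).
Proof.
  intros hp hq hy.
  set (z := y ^ 2 / 4); assert (hz : 0 <= z) by (unfold z; nra).
  assert (hyz : y ^ 2 = 4 * z) by (unfold z; field).
  set (A1 := Gamma q * Gamma p / (2 * Gamma (p + q))).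
  set (A2 := Gamma q * Gamma (p + 1 / 2) / (2 * Gamma (p + q + 1 / 2))).
  pose proof (Gamma_pos q hq); pose proof (Gamma_pos p hp).
  pose proof (Gamma_pos (p + 1 / 2) ltac:(lra)).
  pose proof (Gamma_pos (p + q) ltac:(lra)); pose proof (Gamma_pos (p + q + 1 / 2) ltac:(lra)).
  assert (hA1 : 0 < A1) by (unfold A1; apply Rdiv_lt_0_compat; nra).
  assert (hA2 : 0 < A2) by (unfold A2; apply Rdiv_lt_0_compat; nra).
  assert (HT1 := Un_cv_hyp1F2 p (1 / 2) (p + q) z A1 (Beta p q / 2) (4 * z)
                  hp ltac:(lra) ltac:(lra) hz hA1
                  ltac:(intros k; unfold A1; rewrite <- even_moment_term by auto;
                        apply moment_term_le; auto; lia)).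
  assert (HT2 := Un_cv_hyp1F2 (p + 1 / 2) (3 / 2) (p + q + 1 / 2) z A2 (Beta p q / 2) (4 * z)
                  ltac:(lra) ltac:(lra) ltac:(lra) hz hA2
                  ltac:(intros k; unfold A2; rewrite <- odd_moment_term by auto;
                        apply moment_term_le; auto; lia)).
  apply (improper_01_mult_exp _ (fun n => Beta (p + INR n / 2) q / 2) (Beta p q / 2)); auto.
  - apply continuous_01_beta2_integrand.
  - intros t ht; apply Rmult_le_pos; left; apply Rpower_pos.
  - intros n; pose proof (pos_INR n).
    apply (improper_01_ext (beta2_integrand (p + INR n / 2) q));
    [apply continuous_01_beta2_integrand | |].
    + intros t ht; symmetry; apply beta2_integrand_mult_pow; lra.
    + apply improper_01_beta2_integrand; lra.
  - now apply improper_01_beta2_integrand.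
  - apply (Un_cv_ext (fun N => A1 * sum_f_R0 (hyp1F2_term p (1 / 2) (p + q) z) N
                               + (- y * A2) * sum_f_R0 (hyp1F2_term (p + 1 / 2) (3 / 2) (p + q + 1 / 2) z) N)).
    + intros N; rewrite sum_f_R0_even_odd, !scal_sum, <- sum_plus; apply sum_eq; intros k _.
      rewrite pow_add, pow_mult; replace ((- y) ^ 2) with (4 * z) by (rewrite <- hyz; ring).
      assert (E1 := even_moment_term p q z hp hq k); assert (E2 := odd_moment_term p q z hp hq k).
      fold A1 in E1; fold A2 in E2.
      symmetry; transitivity (A1 * hyp1F2_term p (1 / 2) (p + q) z k
                    + - y * (A2 * hyp1F2_term (p + 1 / 2) (3 / 2) (p + q + 1 / 2) z k)); [|ring].
      rewrite <- E1, <- E2; simpl; unfold Rdiv; ring.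
    + replace (A1 * _ - y * A2 * _) with (A1 * hyp1F2 p (1 / 2) (p + q) z
               + (- y * A2) * hyp1F2 (p + 1 / 2) (3 / 2) (p + q + 1 / 2) z) by ring.
      apply CV_plus; apply (CV_mult (fun _ => _)); auto; apply Un_cv_const.
Qed.

Lemma improper_int_0_1_ext f g l :
  (forall t, f t = g t) -> improper_int_0_1 f l -> improper_int_0_1 g l.
Proof. intros E; replace g with f; auto; now apply functional_extensionality. Qed.

Lemma continuous_01_beta2_exp P Q y : continuous_01 (fun t => beta2_integrand P Q t * exp (- (y * t))).
Proof.
  apply continuous_01_mult; [apply continuous_01_beta2_integrand|].
  intros t _; apply (continuity_pt_ext (fun t => exp (- y * t))); [intros; f_equal; ring|].
  apply continuity_pt_exp_lin.
Qed.

(* With [p = 1 - eps/2] and [q = (m - 2 + 2 eps)/4], the parameters of [Phi] are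
   [(m + 2)/4 = p + q], [(3 - eps)/2 = p + 1/2] and [1 + m/4 = p + q + 1/2]. *)
Lemma Phi_eq m eps v : 0 < m -> m + 2 * eps > 2 -> eps < 2 ->
  let p := 1 - eps / 2 in let q := (m - 2 + 2 * eps) / 4 in let y := v ^ 2 / 4 in
  Phi m eps v = Rpower 2 (- m - 1) * Rpower PI ((2 * eps - 6 - m) / 4) / Gamma q *
    (Gamma q * Gamma p / (2 * Gamma (p + q)) * hyp1F2 p (1 / 2) (p + q) (y ^ 2 / 4)
     - y * (Gamma q * Gamma (p + 1 / 2) / (2 * Gamma (p + q + 1 / 2)))
         * hyp1F2 (p + 1 / 2) (3 / 2) (p + q + 1 / 2) (y ^ 2 / 4)).
Proof.
  intros hm h1 h2 p q y; unfold Phi, p, q, y.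
  replace ((m + 2) / 4) with (1 - eps / 2 + (m - 2 + 2 * eps) / 4) by field.
  replace ((3 - eps) / 2) with (1 - eps / 2 + 1 / 2) by field.
  replace (1 + m / 4) with (1 - eps / 2 + (m - 2 + 2 * eps) / 4 + 1 / 2) by field.
  replace ((v ^ 2 / 4) ^ 2 / 4) with (v ^ 4 / 64) by field.
  pose proof (Gamma_pos ((m - 2 + 2 * eps) / 4) ltac:(lra)).
  pose proof (Gamma_pos (1 - eps / 2 + (m - 2 + 2 * eps) / 4) ltac:(lra)).
  pose proof (Gamma_pos (1 - eps / 2 + (m - 2 + 2 * eps) / 4 + 1 / 2) ltac:(lra)).
  pose proof (Rpower_pos 2 (2 + m)); pose proof (Rpower_pos PI ((6 + m - 2 * eps) / 4)).
  replace (Rpower 2 (- m - 1)) with (2 / Rpower 2 (2 + m))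
    by (replace (- m - 1) with (1 + - (2 + m)) by ring;
        rewrite (Rpower_plus 1), Rpower_1, Rpower_Ropp by lra; field; lra).
  replace (Rpower PI ((2 * eps - 6 - m) / 4)) with (/ Rpower PI ((6 + m - 2 * eps) / 4))
    by (rewrite <- Rpower_Ropp; f_equal; field).
  field; repeat split; lra.
Qed.

Theorem mainTheorem7 (m eps : R) (hm : 0 < m) (h1 : m + 2 * eps > 2) (h2 : eps < 2) :
  forall v : R,
    exists I : R,
      improper_int_0_1
        (fun t => Rpower t (1 - eps) * Rpower (1 - t ^ 2) ((m - 6 + 2 * eps) / 4)
                  * exp (- t * v ^ 2 / 4)) I /\
      Phi m eps v =
        Rpower 2 (- m - 1) * Rpower PI ((2 * eps - 6 - m) / 4)
          / Gamma ((m - 2 + 2 * eps) / 4) * I.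
Proof.
  intros v; eexists; split; [|apply Phi_eq; auto].
  apply (improper_int_0_1_ext
           (fun t => beta2_integrand (1 - eps / 2) ((m - 2 + 2 * eps) / 4) t * exp (- (v ^ 2 / 4 * t)))).
  - intros t; unfold beta2_integrand.
    replace (2 * (1 - eps / 2) - 1) with (1 - eps) by field.
    replace ((m - 2 + 2 * eps) / 4 - 1) with ((m - 6 + 2 * eps) / 4) by field.
    f_equal; f_equal; field.
  - apply improper_01_improper_int_0_1;
      [apply continuous_01_beta2_exp | apply improper_01_beta2_exp; nra].
Qed.
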